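(* Let $p$ be a polynomial of degree $m$ with $p(t)=dt^m+O(t^{m-1})$, let $q$ be a polynomial of degree $d\ge1$ with $q(t)=t^d+O(t^{d-1})$ as $t\to\infty$, let $c\in\mathbb{C}$ and $g(z)=\int_0^zp(t)e^{q(t)}dt+c$. Let $\lambda=(d-1-m)/d$. Let $R>0$ be such that all critical values of $q$ lie in $D(0,R)$ and $2^{-d}|z|^d\le|q(z)|\le2^d|z|^d$ for $|z|\ge\frac12R^{1/d}$, let $G=\mathbb{C}\setminus(\overline{D(0,R)}\cup[0,\infty))$, let $S$ be any component of $q^{-1}(G)$ and let $\varphi$ be the branch of $q^{-1}$ on $G$ with $\varphi(G)=S$. Then there exists $c_S\in\mathbb{C}$ such that $$g(\varphi(w))=c_S+\frac{p(\varphi(w))}{q'(\varphi(w))}\Big(1+\frac{\lambda}{w}+O\big(|w|^{-1-1/d}\big)\Big)e^{w}$$ as $w\to\infty$ in $G$.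
   Context: $D(z_0,r)$ is the open disk. $q$ maps each component of $q^{-1}(G)$ conformally onto $G$, so $\varphi$ is well defined. *)

From Stdlib Require Import Reals List.
From Coquelicot Require Import Coquelicot.
Open Scope C_scope.

(* Polynomials as coefficient lists, lowest degree first:
   [a0; a1; ...; an] represents a0 + a1 t + ... + an t^n. *)
Definition Peval (l : list C) (z : C) : C :=
  fold_right (fun a acc => a + z * acc) (RtoC 0) l.

Fixpoint Pderiv_aux (k : nat) (l : list C) : list C :=
  match l with
  | nil => nil
  | a :: l' => (RtoC (INR k) * a) :: Pderiv_aux (S k) l'
  end.
Definition Pderiv (l : list C) : list C :=
  match l with nil => nil | _ :: l' => Pderiv_aux 1 l' end.

Definition Cexp (z : C) : C :=
  (exp (Re z) * cos (Im z), exp (Re z) * sin (Im z))%R.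

Definition CRInt (f : R -> C) (a b : R) : C :=
  (RInt (fun s => Re (f s)) a b, RInt (fun s => Im (f s)) a b).

(* Complex line integral along the straight segment from 0 to z. *)
Definition seg_integral (f : C -> C) (z : C) : C :=
  z * CRInt (fun s => f (RtoC s * z)) 0 1.

Definition connected_set (A : C -> Prop) : Prop :=
  forall U V : C -> Prop, open U -> open V ->
    (forall x, A x -> U x \/ V x) ->
    (forall x, ~ (A x /\ U x /\ V x)) ->
    (exists x, A x /\ U x) -> (exists x, A x /\ V x) -> False.

(* The connected component of A containing x (empty if ~ A x). *)
Definition component (A : C -> Prop) (x : C) : C -> Prop :=
  fun y => exists B : C -> Prop,
    (forall z, B z -> A z) /\ connected_set B /\ B x /\ B y.

(* Put [u = q z] and [remainder u = g (phi u) - (p/q') (phi u) (1 + lam/u) e^u].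
   Since [g' = p e^q], the chain rule gives [remainder' u = e^u kernel (phi u)],
   and [lam] is exactly the value for which the leading term of [kernel] cancels,
   so that [kernel (phi u) = O(|u|^((m-2d)/d))].  Along rays going to the left
   [e^u] decays exponentially, hence [remainder] has a limit [cS] along the
   negative real axis, and integrating [remainder'] from any [w] in [G] along a
   ray into the left half-plane and then vertically down to the real axis gives
   [|remainder w - cS| = O(e^(Re w) |w|^((m-2d)/d))].  Dividing by
   [|(p/q') (phi w) e^w|], which is of exact order [e^(Re w) |w|^((m+1-d)/d)],
   yields the error term [O(|w|^(-1-1/d))]. *)

From Stdlib Require Import Reals Lra Lia List.
From Coquelicot Require Import Coquelicot.
Open Scope R_scope.

(** * Complex derivatives *)

(* [C] is viewed as a normed module over itself, so that Coquelicot's product and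
   chain rules for [K -> K] functions apply. *)
Notation is_Cderive := (@is_derive C_AbsRing (AbsRing_NormedModule C_AbsRing)).

Lemma is_Cderive_spec (f : C -> C) (z l : C) :
  is_Cderive f z l <-> forall eps, 0 < eps -> exists del, 0 < del /\
    forall h, Cmod h < del -> Cmod (f (z + h) - f z - l * h)%C <= eps * Cmod h.
Proof.
  split.
  - intros [_ Hd] eps Heps.
    destruct (Hd z (fun P H => H) (mkposreal eps Heps)) as [del H].
    exists del. split; [apply cond_pos|]. intros h Hh.
    specialize (H (z + h)%C).
    change (Cmod (z + h - z) < del ->
      Cmod (f (z + h) - f z - (z + h - z) * l) <= eps * Cmod (z + h - z))%C in H.
    replace (z + h - z)%C with h in H by ring. rewrite Cmult_comm. exact (H Hh).
  - intros H. split; [apply is_linear_scal_l|].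
    intros x Hx eps.
    apply (@is_filter_lim_locally_unique _ (AbsRing_NormedModule C_AbsRing)) in Hx. subst x.
    destruct (H eps (cond_pos eps)) as [del [Hdel Hd]].
    exists (mkposreal del Hdel). intros y Hy. change C in y.
    specialize (Hd (y - z)%C Hy). replace (z + (y - z))%C with y in Hd by ring.
    change (Cmod (f y - f z - (y - z) * l)%C <= eps * Cmod (y - z)%C).
    rewrite Cmult_comm. exact Hd.
Qed.

Lemma is_Cderive_const (c z : C) : is_Cderive (fun _ => c) z (RtoC 0).
Proof. exact (@is_derive_const C_AbsRing (AbsRing_NormedModule C_AbsRing) c z). Qed.

Lemma is_Cderive_id (z : C) : is_Cderive (fun x => x) z (RtoC 1).
Proof. exact (is_derive_id z). Qed.

Lemma is_Cderive_ext (f g : C -> C) (z l : C) :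
  (forall x, f x = g x) -> is_Cderive f z l -> is_Cderive g z l.
Proof. exact (@is_derive_ext C_AbsRing (AbsRing_NormedModule C_AbsRing) f g z l). Qed.

Lemma is_Cderive_plus (f g : C -> C) (z a b : C) : is_Cderive f z a -> is_Cderive g z b ->
  is_Cderive (fun x => f x + g x)%C z (a + b)%C.
Proof. exact (@is_derive_plus C_AbsRing (AbsRing_NormedModule C_AbsRing) f g z a b). Qed.

Lemma is_Cderive_minus (f g : C -> C) (z a b : C) : is_Cderive f z a -> is_Cderive g z b ->
  is_Cderive (fun x => f x - g x)%C z (a - b)%C.
Proof. exact (@is_derive_minus C_AbsRing (AbsRing_NormedModule C_AbsRing) f g z a b). Qed.

Lemma is_Cderive_mult (f g : C -> C) (z a b : C) : is_Cderive f z a -> is_Cderive g z b ->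
  is_Cderive (fun x => f x * g x)%C z (a * g z + f z * b)%C.
Proof. intros Hf Hg. exact (is_derive_mult f g z a b Hf Hg Cmult_comm). Qed.

Lemma is_Cderive_comp (f g : C -> C) (z a b : C) : is_Cderive f z a -> is_Cderive g (f z) b ->
  is_Cderive (fun x => g (f x)) z (b * a)%C.
Proof.
  intros Hf Hg. rewrite Cmult_comm.
  exact (@is_derive_comp C_AbsRing (AbsRing_NormedModule C_AbsRing) g f z b a Hg Hf).
Qed.

Lemma Cmod_sub_le (a b : C) : Cmod a - Cmod b <= Cmod (a - b)%C.
Proof.
  pose proof (Cmod_triangle (a - b)%C b) as H.
  replace (a - b + b)%C with a in H by ring. lra.
Qed.

Lemma is_Cderive_Cinv (w : C) : w <> RtoC 0 -> is_Cderive Cinv w (- / (w * w))%C.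
Proof.
  intros Hw. apply is_Cderive_spec. intros eps Heps.
  assert (Hm : 0 < Cmod w) by (apply Cmod_gt_0; auto).
  exists (Rmin (Cmod w / 2) (eps * Cmod w ^ 3 / 2)); split.
  { apply Rmin_glb_lt; [lra|]. apply Rdiv_lt_0_compat; [|lra].
    apply Rmult_lt_0_compat; [lra|]. apply pow_lt; lra. }
  intros h Hh.
  assert (h1 : Cmod h < Cmod w / 2) by (eapply Rlt_le_trans; [exact Hh| apply Rmin_l]).
  assert (h2 : Cmod h < eps * Cmod w ^ 3 / 2) by (eapply Rlt_le_trans; [exact Hh| apply Rmin_r]).
  assert (Hwh : Cmod w / 2 <= Cmod (w + h)%C).
  { pose proof (Cmod_sub_le w (- h)%C) as H. rewrite Cmod_opp in H.
    replace (w - - h)%C with (w + h)%C in H by ring. lra. }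
  assert (Hwh0 : (w + h)%C <> RtoC 0) by (intro E; rewrite E, Cmod_0 in Hwh; lra).
  replace (/ (w + h) - / w - - / (w * w) * h)%C with (h * h / (w * w * (w + h)))%C
    by (field; split; auto).
  rewrite Cmod_div by (repeat apply Cmult_neq_0; auto). rewrite !Cmod_mult.
  pose proof (Cmod_ge_0 h).
  apply Rle_trans with (Cmod h * (eps * Cmod w ^ 3 / 2) / (Cmod w * Cmod w * (Cmod w / 2))).
  - unfold Rdiv. apply Rmult_le_compat; try nra.
    + left. apply Rinv_0_lt_compat. apply Rmult_lt_0_compat; [nra|].
      apply Cmod_gt_0; auto.
    + apply Rinv_le_contravar; [nra|]. apply Rmult_le_compat_l; nra.
  - right. field. lra.
Qed.

Lemma is_Cderive_inv (f : C -> C) (z a : C) : is_Cderive f z a -> f z <> RtoC 0 ->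
  is_Cderive (fun x => / f x)%C z (- a / (f z * f z))%C.
Proof.
  intros Hf Hz. replace (- a / (f z * f z))%C with (- / (f z * f z) * a)%C by (field; auto).
  exact (is_Cderive_comp f Cinv z a _ Hf (is_Cderive_Cinv _ Hz)).
Qed.

Lemma is_Cderive_div (f g : C -> C) (z a b : C) :
  is_Cderive f z a -> is_Cderive g z b -> g z <> RtoC 0 ->
  is_Cderive (fun x => f x / g x)%C z ((a * g z - f z * b) / (g z * g z))%C.
Proof.
  intros Hf Hg Hz.
  replace ((a * g z - f z * b) / (g z * g z))%C
    with (a * / g z + f z * (- b / (g z * g z)))%C by (field; auto).
  exact (is_Cderive_mult f _ z a _ Hf (is_Cderive_inv g z b Hg Hz)).
Qed.

Lemma Cmod_le_Re_Im (c : C) : Cmod c <= Rabs (Re c) + Rabs (Im c).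
Proof.
  pose proof (Cmod2_alt c). pose proof (Cmod_ge_0 c).
  pose proof (Rabs_pos (Re c)). pose proof (Rabs_pos (Im c)).
  pose proof (Rsqr_abs (Re c)). pose proof (Rsqr_abs (Im c)). unfold Rsqr in *.
  simpl in *. nra.
Qed.

Lemma im_le_Cmod (c : C) : Rabs (Im c) <= Cmod c.
Proof.
  pose proof (Cmod2_alt c). pose proof (Cmod_ge_0 c). pose proof (Rabs_pos (Im c)).
  pose proof (Rsqr_abs (Im c)). unfold Rsqr in *. simpl in *. nra.
Qed.

Lemma derivable_pt_lim_spec (f : R -> R) (x l : R) : derivable_pt_lim f x l ->
  forall eps, 0 < eps -> exists del, 0 < del /\
    forall h, Rabs h < del -> Rabs (f (x + h) - f x - l * h) <= eps * Rabs h.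
Proof.
  intros H eps Heps. destruct (H eps Heps) as [d Hd].
  exists d; split; [apply cond_pos|]. intros h Hh.
  destruct (Req_dec h 0) as [->|Hn].
  { rewrite Rplus_0_r. replace (f x - f x - l * 0) with 0 by ring. rewrite !Rabs_R0. lra. }
  replace (f (x + h) - f x - l * h) with (((f (x + h) - f x) / h - l) * h) by (field; auto).
  rewrite Rabs_mult. apply Rmult_le_compat_r; [apply Rabs_pos| left; apply Hd; auto].
Qed.

Lemma Cexp_add (a b : C) : Cexp (a + b)%C = (Cexp a * Cexp b)%C.
Proof.
  destruct a as [x1 y1], b as [x2 y2]. unfold Cexp, Cmult, Cplus; simpl.
  rewrite exp_plus, cos_plus, sin_plus. f_equal; ring.
Qed.

Lemma Cmod_Cexp (z : C) : Cmod (Cexp z) = exp (Re z).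
Proof.
  destruct z as [x y]. unfold Cexp, Cmod; cbn [fst snd Re Im].
  replace ((exp x * cos y) ^ 2 + (exp x * sin y) ^ 2) with (exp x * exp x).
  - apply sqrt_square. left; apply exp_pos.
  - pose proof (sin2_cos2 y). unfold Rsqr in *. nra.
Qed.

Lemma Cexp_neq_0 (z : C) : Cexp z <> RtoC 0.
Proof.
  intro E. pose proof (Cmod_Cexp z) as H. rewrite E, Cmod_0 in H.
  pose proof (exp_pos (Re z)). lra.
Qed.

Lemma Cmod_Cexp_sub_linear_le (x y e : R) : 0 < e ->
  Rabs (exp x - 1 - x) <= e * Rabs x -> Rabs (exp x - 1 - x) <= Rabs x ->
  Rabs (cos y - 1) <= e * Rabs y ->
  Rabs (sin y - y) <= e * Rabs y -> Rabs (sin y - y) <= Rabs y ->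
  Rabs x <= e / 4 -> Rabs x <= 1 ->
  Cmod (Cexp (x, y) - RtoC 1 - (x, y))%C <= 6 * e * Cmod (x, y).
Proof.
  intros He Hexp Hexp1 Hcos Hsin Hsin1 Hx Hx1.
  pose proof (re_le_Cmod (x, y)) as Hre. pose proof (im_le_Cmod (x, y)) as Him.
  simpl in Hre, Him. pose proof (COS_bound y). pose proof (Rabs_pos x). pose proof (Rabs_pos y).
  eapply Rle_trans; [apply Cmod_le_Re_Im|]. simpl.
  assert (Bre : Rabs (exp x * cos y + - (1) + - x) <= e * Rabs x + 2 * e * Rabs y).
  { replace (exp x * cos y + - (1) + - x)
      with ((exp x - 1 - x) * cos y + (1 + x) * (cos y - 1)) by ring.
    eapply Rle_trans; [apply Rabs_triang|]. rewrite !Rabs_mult.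
    assert (Rabs (cos y) <= 1) by (apply Rabs_le; lra).
    assert (Rabs (1 + x) <= 2) by (eapply Rle_trans; [apply Rabs_triang|]; rewrite Rabs_R1; lra).
    assert (Rabs (exp x - 1 - x) * Rabs (cos y) <= e * Rabs x * 1)
      by (apply Rmult_le_compat; auto using Rabs_pos).
    assert (Rabs (1 + x) * Rabs (cos y - 1) <= 2 * (e * Rabs y))
      by (apply Rmult_le_compat; auto using Rabs_pos).
    lra. }
  assert (Bim : Rabs (exp x * sin y + - 0 + - y) <= 2 * e * Rabs y).
  { replace (exp x * sin y + - 0 + - y) with ((exp x - 1) * sin y + (sin y - y)) by ring.
    eapply Rle_trans; [apply Rabs_triang|]. rewrite Rabs_mult.
    assert (Rabs (sin y) <= 2 * Rabs y).
    { replace (sin y) with ((sin y - y) + y) by ring.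
      eapply Rle_trans; [apply Rabs_triang|]. lra. }
    assert (Rabs (exp x - 1) <= e / 2).
    { replace (exp x - 1) with ((exp x - 1 - x) + x) by ring.
      eapply Rle_trans; [apply Rabs_triang|]. lra. }
    assert (Rabs (exp x - 1) * Rabs (sin y) <= e / 2 * (2 * Rabs y))
      by (apply Rmult_le_compat; auto using Rabs_pos).
    lra. }
  replace (exp x * cos y + - (1) + - (1 * x - 0 * y)) with (exp x * cos y + - (1) + - x) by ring.
  replace (exp x * sin y + - 0 + - (1 * y + 0 * x)) with (exp x * sin y + - 0 + - y) by ring.
  assert (e * Rabs x <= e * Cmod (x, y)) by (apply Rmult_le_compat_l; lra).
  assert (e * Rabs y <= e * Cmod (x, y)) by (apply Rmult_le_compat_l; lra).
  assert (0 <= e * Cmod (x, y)) by (apply Rmult_le_pos; lra).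
  lra.
Qed.

Lemma is_Cderive_Cexp_0 : is_Cderive Cexp (RtoC 0) (RtoC 1).
Proof.
  apply is_Cderive_spec. intros eps Heps. set (e := eps / 6). set (e1 := Rmin e 1).
  assert (He : 0 < e) by (unfold e; lra).
  assert (He1 : 0 < e1 <= e /\ e1 <= 1)
    by (unfold e1; split; [split; [apply Rmin_glb_lt|apply Rmin_l]; lra|apply Rmin_r]).
  destruct (derivable_pt_lim_spec _ _ _ (derivable_pt_lim_exp 0) e1 ltac:(lra)) as [d1 [Hd1 H1]].
  destruct (derivable_pt_lim_spec _ _ _ (derivable_pt_lim_cos 0) e He) as [d2 [Hd2 H2]].
  destruct (derivable_pt_lim_spec _ _ _ (derivable_pt_lim_sin 0) e1 ltac:(lra)) as [d3 [Hd3 H3]].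
  rewrite exp_0 in H1. rewrite sin_0, cos_0 in H2. rewrite cos_0, sin_0 in H3.
  exists (Rmin (Rmin d1 d2) (Rmin d3 (Rmin 1 (e / 4)))). split.
  { repeat apply Rmin_glb_lt; lra. }
  intros [x y] Hh.
  pose proof (re_le_Cmod (x, y)) as Hx. pose proof (im_le_Cmod (x, y)) as Hy. simpl in Hx, Hy.
  assert (Hsmall : Cmod (x, y) < d1 /\ Cmod (x, y) < d2 /\ Cmod (x, y) < d3 /\
                   Cmod (x, y) < 1 /\ Cmod (x, y) < e / 4).
  { unfold Rmin in Hh. repeat destruct Rle_dec; repeat split; lra. }
  destruct Hsmall as (h1 & h2 & h3 & h4 & h5).
  specialize (H1 x ltac:(lra)). specialize (H2 y ltac:(lra)). specialize (H3 y ltac:(lra)).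
  rewrite !Rplus_0_l, Rmult_1_l in H1. rewrite !Rplus_0_l in H2, H3.
  replace (cos y - 1 - - 0 * y) with (cos y - 1) in H2 by ring.
  replace (sin y - 0 - 1 * y) with (sin y - y) in H3 by ring.
  replace (RtoC 0 + (x, y))%C with ((x, y) : C) by (apply injective_projections; simpl; ring).
  replace (Cexp (RtoC 0)) with (RtoC 1)
    by (unfold Cexp; simpl; rewrite exp_0, cos_0, sin_0; apply injective_projections; simpl; ring).
  replace (eps * Cmod (x, y)) with (6 * e * Cmod (x, y)) by (unfold e; field).
  pose proof (Rabs_pos x). pose proof (Rabs_pos y).
  rewrite Cmult_1_l. apply Cmod_Cexp_sub_linear_le; nra.
Qed.

Lemma is_Cderive_Cexp (z : C) : is_Cderive Cexp z (Cexp z).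
Proof.
  assert (Hshift : is_Cderive (fun x => Cexp (x - z))%C z (RtoC 1)).
  { replace (RtoC 1) with (RtoC 1 * (RtoC 1 - RtoC 0))%C by ring.
    apply (is_Cderive_comp (fun x => x - z)%C Cexp).
    - apply is_Cderive_minus; [apply is_Cderive_id | apply is_Cderive_const].
    - replace (z - z)%C with (RtoC 0) by ring. apply is_Cderive_Cexp_0. }
  apply (is_Cderive_ext (fun x => Cexp z * Cexp (x - z))%C).
  - intros x. rewrite <- Cexp_add. f_equal. ring.
  - assert (D := is_Cderive_mult _ _ z _ _ (is_Cderive_const (Cexp z) z) Hshift).
    cbv beta in D. replace (RtoC 0 * Cexp (z - z) + Cexp z * RtoC 1)%C with (Cexp z) in D
      by ring.
    exact D.
Qed.

Lemma Pderiv_aux_eval (k : nat) (l : list C) (z : C) :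
  Peval (Pderiv_aux k l) z = (RtoC (INR k) * Peval l z + z * Peval (Pderiv l) z)%C.
Proof.
  revert k. induction l as [|a l IH]; intros k.
  - simpl. ring.
  - change (Peval ((RtoC (INR k) * a)%C :: Pderiv_aux (S k) l) z
      = (RtoC (INR k) * (a + z * Peval l z) + z * Peval (Pderiv_aux 1 l) z)%C).
    simpl Peval at 1. rewrite (IH (S k)), (IH 1%nat), S_INR, RtoC_plus. simpl. ring.
Qed.

Lemma is_Cderive_Peval (l : list C) (z : C) : is_Cderive (Peval l) z (Peval (Pderiv l) z).
Proof.
  induction l as [|a l IH].
  - apply is_Cderive_const.
  - assert (D := is_Cderive_plus _ _ z _ _ (is_Cderive_const a z)
                   (is_Cderive_mult _ _ z _ _ (is_Cderive_id z) IH)).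
    cbv beta in D. replace (RtoC 0 + (RtoC 1 * Peval l z + z * Peval (Pderiv l) z))%C
      with (Peval (Pderiv (a :: l)) z) in D.
    + exact D.
    + simpl Pderiv. rewrite Pderiv_aux_eval. simpl. ring.
Qed.

Lemma Pderiv_length (l : list C) : length (Pderiv l) = pred (length l).
Proof.
  destruct l as [|a l]; simpl; [reflexivity|].
  generalize 1%nat. induction l; simpl; auto.
Qed.

Lemma Pderiv_aux_nth (k : nat) (l : list C) (j : nat) :
  nth j (Pderiv_aux k l) (RtoC 0) = (RtoC (INR (k + j)) * nth j l (RtoC 0))%C.
Proof.
  revert k j; induction l as [|a l IH]; intros k j; destruct j; simpl.
  - ring.
  - ring.
  - rewrite Nat.add_0_r. reflexivity.
  - rewrite IH. do 3 f_equal. lia.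
Qed.

Lemma Pderiv_nth (l : list C) (j : nat) :
  nth j (Pderiv l) (RtoC 0) = (RtoC (INR (S j)) * nth (S j) l (RtoC 0))%C.
Proof.
  destruct l as [|a l]; [destruct j; simpl; ring|].
  exact (Pderiv_aux_nth 1 l j).
Qed.

Lemma continuous_C_spec (f : C -> C) (w : C) : continuous f w ->
  forall eps, 0 < eps -> exists del, 0 < del /\
    forall v, Cmod (v - w)%C < del -> Cmod (f v - f w)%C < eps.
Proof.
  intros H eps Heps. apply filterlim_locally with (eps := mkposreal (eps / 2) ltac:(lra)) in H.
  destruct H as [d Hd]. exists d; split; [apply cond_pos|]. intros v Hv.
  pose proof (re_le_Cmod (v - w)%C). pose proof (im_le_Cmod (v - w)%C).
  destruct (Hd v) as [H1 H2].
  { split; [change (Rabs (fst v - fst w) < d) | change (Rabs (snd v - snd w) < d)];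
      simpl in *; unfold Rminus; lra. }
  change (Rabs (fst (f v) - fst (f w)) < eps / 2) in H1.
  change (Rabs (snd (f v) - snd (f w)) < eps / 2) in H2.
  eapply Rle_lt_trans; [apply Cmod_le_Re_Im|]. simpl. unfold Rminus in *. lra.
Qed.

(* The inverse-function rule needs only continuity of the local inverse, not its
   differentiability: [q(phi v) - q(phi w) = v - w] is linearised at [phi w]. *)
Lemma is_Cderive_inverse (q phi : C -> C) (w l : C) :
  (exists del, 0 < del /\ forall v, Cmod (v - w)%C < del -> q (phi v) = v) ->
  continuous phi w -> is_Cderive q (phi w) l -> l <> RtoC 0 -> is_Cderive phi w (/ l)%C.
Proof.
  intros [d0 [Hd0 Hinv]] Hc Hq Hl. apply is_Cderive_spec. intros eps Heps.
  rewrite is_Cderive_spec in Hq.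
  assert (Hm : 0 < Cmod l) by (apply Cmod_gt_0; auto).
  set (e1 := Rmin (Cmod l / 2) (eps * (Cmod l * Cmod l) / 2)).
  assert (He1 : 0 < e1 /\ e1 <= Cmod l / 2 /\ e1 <= eps * (Cmod l * Cmod l) / 2).
  { unfold e1. split; [|split; [apply Rmin_l | apply Rmin_r]].
    apply Rmin_glb_lt; [lra|]. apply Rdiv_lt_0_compat; [apply Rmult_lt_0_compat; nra | lra]. }
  destruct (Hq e1 ltac:(lra)) as [dq [Hdq Hq1]].
  destruct (continuous_C_spec phi w Hc dq Hdq) as [dc [Hdc Hc1]].
  exists (Rmin d0 dc). split; [apply Rmin_glb_lt; auto|].
  intros h Hh.
  assert (Hh' : Cmod h < d0 /\ Cmod h < dc)
    by (split; eapply Rlt_le_trans; [exact Hh | apply Rmin_l | exact Hh | apply Rmin_r]).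
  replace h with ((w + h) - w)%C in Hh' at 1 2 by ring.
  set (k := (phi (w + h) - phi w)%C).
  specialize (Hq1 k (Hc1 _ (proj2 Hh'))).
  replace (phi w + k)%C with (phi (w + h)%C) in Hq1 by (unfold k; ring).
  rewrite (Hinv _ (proj1 Hh')), Hinv in Hq1
    by (replace (w - w)%C with (RtoC 0) by ring; rewrite Cmod_0; lra).
  replace (w + h - w - l * k)%C with (h - l * k)%C in Hq1 by ring.
  assert (Hk : Cmod l * Cmod k <= 2 * Cmod h).
  { assert (Cmod l * Cmod k <= Cmod h + e1 * Cmod k).
    { rewrite <- Cmod_mult. replace (l * k)%C with (h + - (h - l * k))%C by ring.
      eapply Rle_trans; [apply Cmod_triangle|]. rewrite Cmod_opp. lra. }
    pose proof (Cmod_ge_0 k). nra. }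
  replace (k - / l * h)%C with (- ((h - l * k) / l))%C by (field; auto).
  rewrite Cmod_opp, Cmod_div by auto.
  apply Rmult_le_reg_r with (Cmod l); [lra|]. unfold Rdiv. rewrite Rmult_assoc, Rinv_l by lra.
  pose proof (Cmod_ge_0 k). pose proof (Cmod_ge_0 h). nra.
Qed.

(** * Derivatives along lines, the mean value inequality and segment integrals *)

Definition is_Rderive (F : R -> C) (s : R) (l : C) : Prop :=
  forall eps, 0 < eps -> exists del, 0 < del /\
    forall h : R, Rabs h < del -> Cmod (F (s + h)%R - F s - l * RtoC h)%C <= eps * Rabs h.

Lemma is_Rderive_ext F G s l : (forall t, F t = G t) -> is_Rderive F s l -> is_Rderive G s l.
Proof.
  intros E H eps Heps. destruct (H eps Heps) as [d [Hd H1]].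
  exists d; split; auto. intros h Hh. rewrite <- !E. auto.
Qed.

Lemma is_Rderive_line (F : C -> C) (a b : C) (s : R) (l : C) : is_Cderive F (a + RtoC s * b)%C l ->
  is_Rderive (fun s => F (a + RtoC s * b)%C) s (l * b)%C.
Proof.
  rewrite is_Cderive_spec. intros H eps Heps. pose proof (Cmod_ge_0 b).
  destruct (H (eps / (Cmod b + 1))) as [d [Hd H1]]; [apply Rdiv_lt_0_compat; lra|].
  exists (d / (Cmod b + 1)); split; [apply Rdiv_lt_0_compat; lra|].
  intros h Hh. pose proof (Rabs_pos h).
  assert (Hhb : Rabs h * Cmod b <= Rabs h * (Cmod b + 1)) by nra.
  assert (Hc : Cmod (RtoC h * b)%C < d).
  { rewrite Cmod_mult, Cmod_R.
    apply Rmult_lt_compat_r with (r := Cmod b + 1) in Hh; [|lra].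
    replace (d / (Cmod b + 1) * (Cmod b + 1)) with d in Hh by (field; lra). lra. }
  specialize (H1 _ Hc).
  replace (a + RtoC (s + h) * b)%C with (a + RtoC s * b + RtoC h * b)%C
    by (rewrite RtoC_plus; ring).
  replace (l * b * RtoC h)%C with (l * (RtoC h * b))%C by ring.
  eapply Rle_trans; [exact H1|]. rewrite Cmod_mult, Cmod_R.
  apply Rle_trans with (eps / (Cmod b + 1) * (Rabs h * (Cmod b + 1))).
  - apply Rmult_le_compat_l; [apply Rlt_le, Rdiv_lt_0_compat|]; lra.
  - right. field. lra.
Qed.

Lemma is_Rderive_real (F : C -> C) (s : R) (l : C) :
  is_Cderive F (RtoC s) l -> is_Rderive (fun s => F (RtoC s)) s l.
Proof.
  intros H. replace (RtoC s) with (RtoC 0 + RtoC s * RtoC 1)%C in H by ring.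
  apply is_Rderive_line in H. rewrite Cmult_1_r in H.
  eapply is_Rderive_ext; [|exact H]. intros t. cbv beta. f_equal. ring.
Qed.

Lemma is_Rderive_Re_mult F s l (w : C) : is_Rderive F s l ->
  derivable_pt_lim (fun s => Re (w * F s)%C) s (Re (w * l)%C).
Proof.
  intros H eps Heps. pose proof (Cmod_ge_0 w).
  destruct (H (eps / (2 * (Cmod w + 1)))) as [d [Hd H1]]; [apply Rdiv_lt_0_compat; lra|].
  exists (mkposreal d Hd). intros h Hh0 Hh. simpl in Hh.
  specialize (H1 h Hh). assert (0 < Rabs h) by (apply Rabs_pos_lt; auto).
  replace ((Re (w * F (s + h)) - Re (w * F s)) / h - Re (w * l))
    with (Re (w * (F (s + h)%R - F s - l * RtoC h))%C / h).
  2:{ destruct w as [w1 w2], (F (s + h)%R) as [a1 a2], (F s) as [b1 b2], l as [l1 l2].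
      unfold Cmult, Cminus, Cplus, Copp, RtoC, Re; simpl. field. auto. }
  unfold Rdiv. rewrite Rabs_mult, Rabs_inv.
  apply Rle_lt_trans with (Cmod w * (eps / (2 * (Cmod w + 1)) * Rabs h) * / Rabs h).
  - apply Rmult_le_compat_r; [left; apply Rinv_0_lt_compat; auto|].
    eapply Rle_trans; [apply re_le_Cmod|]. rewrite Cmod_mult. apply Rmult_le_compat_l; auto.
  - replace (Cmod w * (eps / (2 * (Cmod w + 1)) * Rabs h) * / Rabs h)
      with (eps / 2 * (Cmod w / (Cmod w + 1))) by (field; lra).
    assert (Cmod w / (Cmod w + 1) < 1).
    { apply Rmult_lt_reg_r with (Cmod w + 1); [lra|].
      unfold Rdiv. rewrite Rmult_assoc, Rinv_l; lra. }
    assert (0 <= Cmod w / (Cmod w + 1)) by (apply Rdiv_le_0_compat; lra).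
    nra.
Qed.

(* Rotating the increment [F b - F a] onto the positive real axis reduces the
   inequality to the real mean value theorem for [Re (w F) - beta]. *)
Lemma mean_value_ineq (F F' : R -> C) (beta beta' : R -> R) a b : a <= b ->
  (forall s, a <= s <= b -> is_Rderive F s (F' s)) ->
  (forall s, a <= s <= b -> derivable_pt_lim beta s (beta' s)) ->
  (forall s, a <= s <= b -> Cmod (F' s) <= beta' s) ->
  Cmod (F b - F a)%C <= beta b - beta a.
Proof.
  intros Hab HF Hb Hbd.
  destruct (Req_dec a b) as [<-|Hab'].
  { replace (F a - F a)%C with (RtoC 0) by ring. rewrite Cmod_0. lra. }
  set (v := (F b - F a)%C).
  set (w := if Ceq_dec v (RtoC 0) then RtoC 0 else (Cconj v / RtoC (Cmod v))%C).
  assert (Hw : Re (w * v)%C = Cmod v /\ Cmod w <= 1).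
  { unfold w. destruct (Ceq_dec v (RtoC 0)) as [E|E].
    - rewrite E, Cmult_0_l, Cmod_0. split; [reflexivity | lra].
    - assert (Hv : 0 < Cmod v) by (apply Cmod_gt_0; auto). split.
      + replace (Cconj v / RtoC (Cmod v) * v)%C with (RtoC (/ Cmod v) * (v * Cconj v))%C
          by (rewrite RtoC_inv by lra; unfold Cdiv; ring).
        rewrite <- Cmod2_conj, <- RtoC_mult, re_RtoC. field. lra.
      + rewrite Cmod_div, Cmod_conj, Cmod_R, Rabs_pos_eq;
          [right; field; lra | lra | intro X; apply RtoC_inj in X; lra]. }
  destruct Hw as [Hw1 Hw2].
  set (psi := fun s => Re (w * F s)%C - beta s).
  destruct (MVT_cor2 psi (fun s => Re (w * F' s)%C - beta' s) a b) as [c [Hc Hc2]]; [lra| |].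
  { intros c Hc. apply derivable_pt_lim_minus; [apply is_Rderive_Re_mult|]; auto. }
  assert (Hle : Re (w * F' c)%C - beta' c <= 0).
  { apply Rle_trans with (Cmod (w * F' c)%C - beta' c).
    - pose proof (re_le_Cmod (w * F' c)%C) as H. apply Rabs_le_between in H. lra.
    - rewrite Cmod_mult. assert (Cmod (F' c) <= beta' c) by (apply Hbd; lra).
      pose proof (Cmod_ge_0 (F' c)). pose proof (Cmod_ge_0 w). nra. }
  unfold psi in Hc.
  assert (Re (w * F b)%C - Re (w * F a)%C = Re (w * v)%C).
  { unfold v. destruct w as [w1 w2], (F b) as [a1 a2], (F a) as [b1 b2].
    unfold Cmult, Cminus, Cplus, Copp, Re; simpl. ring. }
  nra.
Qed.

Lemma Cmod_convex_comb x y t rho : 0 <= t <= 1 -> Cmod x <= rho -> Cmod y <= rho ->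
  Cmod (x + RtoC t * (y - x))%C <= rho.
Proof.
  intros Ht Hx Hy.
  replace (x + RtoC t * (y - x))%C with (RtoC (1 - t) * x + RtoC t * y)%C
    by (rewrite RtoC_minus; ring).
  eapply Rle_trans; [apply Cmod_triangle|]. rewrite !Cmod_mult, !Cmod_R, !Rabs_pos_eq by lra.
  nra.
Qed.

Lemma Cmod_sub_le_segment (F F' : C -> C) (x y : C) (M : R) :
  (forall t, 0 <= t <= 1 -> is_Cderive F (x + RtoC t * (y - x))%C (F' (x + RtoC t * (y - x))%C)) ->
  (forall t, 0 <= t <= 1 -> Cmod (F' (x + RtoC t * (y - x))%C) <= M) ->
  Cmod (F y - F x)%C <= M * Cmod (y - x)%C.
Proof.
  intros HD HB.
  assert (H := mean_value_ineq (fun t => F (x + RtoC t * (y - x))%C)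
    (fun t => F' (x + RtoC t * (y - x)) * (y - x))%C
    (fun t => M * Cmod (y - x)%C * t) (fun t => M * Cmod (y - x)%C) 0 1 ltac:(lra)).
  cbv beta in H.
  replace (x + RtoC 1 * (y - x))%C with y in H by ring.
  replace (x + RtoC 0 * (y - x))%C with x in H by ring.
  eapply Rle_trans; [apply H|lra].
  - intros s Hs. apply is_Rderive_line. apply HD; auto.
  - intros s _. pose proof (derivable_pt_lim_scal id (M * Cmod (y - x)) s 1
      (derivable_pt_lim_id s)) as D.
    unfold mult_real_fct, id in D. rewrite Rmult_1_r in D. exact D.
  - intros s Hs. rewrite Cmod_mult. apply Rmult_le_compat_r; auto using Cmod_ge_0.
Qed.

Lemma is_Rderive_continuous F s l : is_Rderive F s l ->
  continuous (fun s => Re (F s)) s /\ continuous (fun s => Im (F s)) s.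
Proof.
  intros H.
  assert (Hc : forall w : C, continuous (fun s => Re (w * F s)%C) s).
  { intros w. apply continuity_pt_filterlim, derivable_continuous_pt.
    exists (Re (w * l)%C). apply is_Rderive_Re_mult, H. }
  split.
  - eapply continuous_ext; [|apply (Hc (RtoC 1))]. intros t. cbv beta. destruct (F t). simpl. ring.
  - eapply continuous_ext; [|apply (Hc (- Ci)%C)]. intros t. cbv beta. destruct (F t). simpl. ring.
Qed.

Definition ex_CRInt (F : R -> C) (a b : R) : Prop :=
  ex_RInt (fun s => Re (F s)) a b /\ ex_RInt (fun s => Im (F s)) a b.

Lemma ex_CRInt_is_Rderive F a b : (forall s, exists l, is_Rderive F s l) -> ex_CRInt F a b.
Proof.
  intros H.
  split; apply (ex_RInt_continuous (V := R_CompleteNormedModule)); intros z _;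
    destruct (H z) as [l Hl]; apply (is_Rderive_continuous F z l Hl).
Qed.

Lemma ex_CRInt_plus F G a b : ex_CRInt F a b -> ex_CRInt G a b ->
  ex_CRInt (fun s => F s + G s)%C a b.
Proof.
  intros [F1 F2] [G1 G2].
  split; apply (ex_RInt_plus (V := R_NormedModule)); assumption.
Qed.

Lemma ex_CRInt_scal c F a b : ex_CRInt F a b -> ex_CRInt (fun s => c * F s)%C a b.
Proof.
  intros [F1 F2]. split.
  - eapply ex_RInt_ext; [|apply (ex_RInt_minus (V := R_NormedModule));
      apply (ex_RInt_scal (V := R_NormedModule)); [exact F1 | exact F2]].
    intros x _. simpl. reflexivity.
  - eapply ex_RInt_ext; [|apply (ex_RInt_plus (V := R_NormedModule));
      apply (ex_RInt_scal (V := R_NormedModule)); [exact F2 | exact F1]].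
    intros x _. simpl. reflexivity.
Qed.

Lemma CRInt_ext F G a b : (forall s, F s = G s) -> CRInt F a b = CRInt G a b.
Proof.
  intros E. unfold CRInt. f_equal; apply RInt_ext; intros; rewrite E; reflexivity.
Qed.

Lemma CRInt_plus F G a b : ex_CRInt F a b -> ex_CRInt G a b ->
  CRInt (fun s => F s + G s)%C a b = (CRInt F a b + CRInt G a b)%C.
Proof.
  intros [F1 F2] [G1 G2]. unfold CRInt. simpl.
  rewrite (RInt_plus (V := R_CompleteNormedModule) (fun s => Re (F s))),
    (RInt_plus (V := R_CompleteNormedModule) (fun s => Im (F s))) by assumption.
  reflexivity.
Qed.

Lemma CRInt_scal (c : C) F a b : ex_CRInt F a b ->
  CRInt (fun s => c * F s)%C a b = (c * CRInt F a b)%C.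
Proof.
  intros [F1 F2]. unfold CRInt. simpl.
  rewrite (RInt_minus (V := R_CompleteNormedModule)),
    (RInt_plus (V := R_CompleteNormedModule))
    by (apply (ex_RInt_scal (V := R_NormedModule)); assumption).
  rewrite !(RInt_scal (V := R_CompleteNormedModule)) by assumption.
  reflexivity.
Qed.

Lemma Cmod_CRInt_le F M : ex_CRInt F 0 1 -> (forall s, 0 <= s <= 1 -> Cmod (F s) <= M) ->
  Cmod (CRInt F 0 1) <= 2 * M.
Proof.
  intros [F1 F2] HM. eapply Rle_trans; [apply Cmod_le_Re_Im|]. unfold CRInt; simpl.
  assert (A1 : Rabs (RInt (fun s => Re (F s)) 0 1) <= (1 - 0) * M).
  { apply abs_RInt_le_const; auto; [lra|]. intros t Ht.
    eapply Rle_trans; [apply re_le_Cmod | auto]. }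
  assert (A2 : Rabs (RInt (fun s => Im (F s)) 0 1) <= (1 - 0) * M).
  { apply abs_RInt_le_const; auto; [lra|]. intros t Ht.
    eapply Rle_trans; [apply im_le_Cmod | auto]. }
  lra.
Qed.

Lemma CRInt_FTC (Phi F : R -> C) a b : a <= b ->
  (forall s, a <= s <= b -> is_Rderive Phi s (F s)) ->
  (forall s, a <= s <= b -> exists l, is_Rderive F s l) ->
  CRInt F a b = (Phi b - Phi a)%C.
Proof.
  intros Hab HP HF.
  assert (Hpart : forall w : C, is_RInt (fun s => Re (w * F s)%C) a b
                                  (Re (w * Phi b)%C - Re (w * Phi a)%C)).
  { intros w. apply (is_RInt_derive (V := R_CompleteNormedModule) (fun s => Re (w * Phi s)%C)).
    - intros x Hx. rewrite Rmin_left, Rmax_right in Hx by lra.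
      apply is_derive_Reals, is_Rderive_Re_mult, HP, Hx.
    - intros x Hx. rewrite Rmin_left, Rmax_right in Hx by lra.
      destruct (HF x Hx) as [l Hl].
      apply continuity_pt_filterlim, derivable_continuous_pt.
      exists (Re (w * l)%C). apply is_Rderive_Re_mult, Hl. }
  assert (Ere : RInt (fun s => Re (F s)) a b = Re (Phi b) - Re (Phi a)).
  { rewrite (RInt_ext _ (fun s => Re (RtoC 1 * F s)%C))
      by (intros x _; rewrite Cmult_1_l; reflexivity).
    rewrite (is_RInt_unique (V := R_CompleteNormedModule) _ _ _ _ (Hpart (RtoC 1))).
    rewrite !Cmult_1_l. reflexivity. }
  assert (Eim : RInt (fun s => Im (F s)) a b = Im (Phi b) - Im (Phi a)).
  { rewrite (RInt_ext _ (fun s => Re (- Ci * F s)%C))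
      by (intros x _; destruct (F x); simpl; ring).
    rewrite (is_RInt_unique (V := R_CompleteNormedModule) _ _ _ _ (Hpart (- Ci)%C)).
    destruct (Phi a), (Phi b). simpl. ring. }
  unfold CRInt. rewrite Ere, Eim. destruct (Phi a), (Phi b). reflexivity.
Qed.

Definition bounded_on_balls (f : C -> C) : Prop :=
  forall rho, exists M, 0 <= M /\ forall x, Cmod x <= rho -> Cmod (f x) <= M.

Lemma bounded_on_balls_Peval l : bounded_on_balls (Peval l).
Proof.
  intros rho. induction l as [|a l [M [HM H]]].
  - exists 0. split; [lra|]. intros x _. simpl. rewrite Cmod_0. lra.
  - exists (Cmod a + Rabs rho * M). split.
    { pose proof (Cmod_ge_0 a). pose proof (Rabs_pos rho). nra. }
    intros x Hx. simpl. eapply Rle_trans; [apply Cmod_triangle|].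
    rewrite Cmod_mult. apply Rplus_le_compat_l.
    apply Rmult_le_compat; auto using Cmod_ge_0. eapply Rle_trans; [exact Hx | apply Rle_abs].
Qed.

Lemma bounded_on_balls_plus f g : bounded_on_balls f -> bounded_on_balls g ->
  bounded_on_balls (fun x => f x + g x)%C.
Proof.
  intros Hf Hg rho. destruct (Hf rho) as [M1 [H1 K1]], (Hg rho) as [M2 [H2 K2]].
  exists (M1 + M2); split; [lra|]. intros x Hx. eapply Rle_trans; [apply Cmod_triangle|].
  specialize (K1 x Hx); specialize (K2 x Hx). lra.
Qed.

Lemma bounded_on_balls_mult f g : bounded_on_balls f -> bounded_on_balls g ->
  bounded_on_balls (fun x => f x * g x)%C.
Proof.
  intros Hf Hg rho. destruct (Hf rho) as [M1 [H1 K1]], (Hg rho) as [M2 [H2 K2]].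
  exists (M1 * M2); split; [nra|]. intros x Hx. rewrite Cmod_mult.
  apply Rmult_le_compat; auto using Cmod_ge_0.
Qed.

Lemma bounded_on_balls_Cexp f : bounded_on_balls f -> bounded_on_balls (fun x => Cexp (f x)).
Proof.
  intros Hf rho. destruct (Hf rho) as [M [HM K]].
  exists (exp M); split; [left; apply exp_pos|]. intros x Hx. rewrite Cmod_Cexp.
  pose proof (re_le_Cmod (f x)) as H. apply Rabs_le_between in H.
  specialize (K x Hx). destruct (Req_dec (Re (f x)) M) as [->|Hne]; [lra|].
  left. apply exp_increasing. lra.
Qed.

(* First-order Taylor bound, from the mean value inequality applied to
   [t |-> f t - t f1 x]. *)
Lemma taylor1_le (f f1 : C -> C) (x y : C) (M : R) :
  (forall t, 0 <= t <= 1 -> is_Cderive f (x + RtoC t * (y - x))%C (f1 (x + RtoC t * (y - x))%C)) ->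
  (forall t, 0 <= t <= 1 -> Cmod (f1 (x + RtoC t * (y - x)) - f1 x)%C <= M * Cmod (y - x)%C) ->
  Cmod (f y - f x - (y - x) * f1 x)%C <= M * Cmod (y - x)%C * Cmod (y - x)%C.
Proof.
  intros Hd Hb.
  replace (f y - f x - (y - x) * f1 x)%C
    with ((f y - y * f1 x) - (f x - x * f1 x))%C by ring.
  apply (Cmod_sub_le_segment (fun t => f t - t * f1 x)%C (fun t => f1 t - f1 x)%C); auto.
  intros t Ht. assert (D := is_Cderive_minus _ _ _ _ _ (Hd t Ht)
    (is_Cderive_mult _ _ _ _ _ (is_Cderive_id (x + RtoC t * (y - x))%C)
       (is_Cderive_const (f1 x) (x + RtoC t * (y - x))%C))).
  cbv beta in D. replace (RtoC 1 * f1 x + (x + RtoC t * (y - x)) * RtoC 0)%C with (f1 x) in D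
    by ring.
  exact D.
Qed.

Lemma is_Cderive_comp_mult_r (h : C -> C) (w z l : C) : is_Cderive h (z * w)%C l ->
  is_Cderive (fun x => h (x * w))%C z (l * w)%C.
Proof.
  intros H. assert (Hw : is_Cderive (fun x => x * w)%C z w).
  { assert (D := is_Cderive_mult _ _ z _ _ (is_Cderive_id z) (is_Cderive_const w z)).
    cbv beta in D. replace (RtoC 1 * w + z * RtoC 0)%C with w in D by ring. exact D. }
  exact (is_Cderive_comp _ h z w l Hw H).
Qed.

Section SegmentPrimitive.

Variables f f1 f2 : C -> C.
Hypothesis f_deriv : forall z, is_Cderive f z (f1 z).
Hypothesis f1_deriv : forall z, is_Cderive f1 z (f2 z).
Hypothesis f2_bounded : bounded_on_balls f2.

Let avg (z : C) : C := CRInt (fun s => f (RtoC s * z)%C) 0 1.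
Let avg' (z : C) : C := CRInt (fun s => RtoC s * f1 (RtoC s * z))%C 0 1.

Lemma ex_CRInt_avg (w : C) : ex_CRInt (fun s => f (RtoC s * w)%C) 0 1.
Proof.
  apply ex_CRInt_is_Rderive. intros s. eexists.
  apply (is_Rderive_real (fun x => f (x * w))%C), is_Cderive_comp_mult_r, f_deriv.
Qed.

Lemma ex_CRInt_avg' (w : C) : ex_CRInt (fun s => RtoC s * f1 (RtoC s * w))%C 0 1.
Proof.
  apply ex_CRInt_is_Rderive. intros s. eexists.
  apply (is_Rderive_real (fun x => x * f1 (x * w))%C).
  apply is_Cderive_mult; [apply is_Cderive_id|].
  apply is_Cderive_comp_mult_r, f1_deriv.
Qed.

Lemma taylor1_le_ball (rho : R) : exists M, 0 <= M /\ forall x y,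
  Cmod x <= rho -> Cmod y <= rho ->
  Cmod (f y - f x - (y - x) * f1 x)%C <= M * Cmod (y - x)%C * Cmod (y - x)%C.
Proof.
  destruct (f2_bounded rho) as [M [HM HB]]. exists M. split; [exact HM|].
  intros x y Hx Hy. apply taylor1_le; [intros; apply f_deriv|].
  intros t Ht. set (x' := (x + RtoC t * (y - x))%C).
  assert (Hx' : Cmod x' <= rho) by (apply Cmod_convex_comb; auto).
  eapply Rle_trans.
  - apply (Cmod_sub_le_segment f1 f2 x x' M).
    + intros; apply f1_deriv.
    + intros u Hu. apply HB, Cmod_convex_comb; auto.
  - apply Rmult_le_compat_l; [exact HM|]. unfold x'.
    replace (x + RtoC t * (y - x) - x)%C with (RtoC t * (y - x))%C by ring.
    rewrite Cmod_mult, Cmod_R, Rabs_pos_eq by lra.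
    pose proof (Cmod_ge_0 (y - x)%C). nra.
Qed.

(* The difference quotient of [avg] minus [avg'] is the integral of a first-order
   Taylor remainder, which is [O(h^2)] uniformly in [s]. *)
Lemma is_Cderive_avg (z : C) : is_Cderive avg z (avg' z).
Proof.
  apply is_Cderive_spec. destruct (taylor1_le_ball (Cmod z + 1)) as [M [HM HT]].
  intros eps Heps. exists (Rmin 1 (eps / (2 * M + 1))). split.
  { apply Rmin_glb_lt; [lra | apply Rdiv_lt_0_compat; lra]. }
  intros h Hh.
  assert (Hh1 : Cmod h <= 1) by (pose proof (Rmin_l 1 (eps / (2 * M + 1))); lra).
  assert (Hh2 : Cmod h <= eps / (2 * M + 1)) by (pose proof (Rmin_r 1 (eps / (2 * M + 1))); lra).
  set (A := fun s => f (RtoC s * (z + h))%C).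
  set (B := fun s => (RtoC (-1) * f (RtoC s * z))%C).
  set (D := fun s => (- h * (RtoC s * f1 (RtoC s * z)))%C).
  assert (eA : ex_CRInt A 0 1) by apply ex_CRInt_avg.
  assert (eB : ex_CRInt B 0 1) by apply ex_CRInt_scal, ex_CRInt_avg.
  assert (eD : ex_CRInt D 0 1) by apply ex_CRInt_scal, ex_CRInt_avg'.
  assert (eAB : ex_CRInt (fun s => A s + B s)%C 0 1) by (apply ex_CRInt_plus; assumption).
  assert (HE : (avg (z + h) - avg z - avg' z * h)%C
               = CRInt (fun s => A s + B s + D s)%C 0 1).
  { rewrite (CRInt_plus _ D 0 1 eAB eD), (CRInt_plus A B 0 1 eA eB).
    unfold B, D. rewrite (CRInt_scal (RtoC (-1)) _ 0 1 (ex_CRInt_avg z)).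
    rewrite (CRInt_scal (- h)%C _ 0 1 (ex_CRInt_avg' z)).
    unfold avg, avg', A. ring. }
  rewrite HE. pose proof (Cmod_ge_0 h).
  apply Rle_trans with (2 * (M * Cmod h * Cmod h)).
  - apply Cmod_CRInt_le; [apply ex_CRInt_plus; assumption|].
    intros s Hs. unfold A, B, D.
    replace (f (RtoC s * (z + h)) + RtoC (-1) * f (RtoC s * z)
             + - h * (RtoC s * f1 (RtoC s * z)))%C
      with (f (RtoC s * (z + h)) - f (RtoC s * z)
            - (RtoC s * (z + h) - RtoC s * z) * f1 (RtoC s * z))%C by ring.
    assert (Hs' : Cmod (RtoC s * (z + h) - RtoC s * z)%C <= Cmod h).
    { replace (RtoC s * (z + h) - RtoC s * z)%C with (RtoC s * h)%C by ring.
      rewrite Cmod_mult, Cmod_R, Rabs_pos_eq by lra. nra. }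
    pose proof (Cmod_ge_0 (RtoC s * (z + h) - RtoC s * z)%C).
    eapply Rle_trans; [apply HT|].
    + rewrite Cmod_mult, Cmod_R, Rabs_pos_eq by lra. pose proof (Cmod_ge_0 z). nra.
    + rewrite Cmod_mult, Cmod_R, Rabs_pos_eq by lra.
      pose proof (Cmod_triangle z h). pose proof (Cmod_ge_0 (z + h)%C). nra.
    + apply Rmult_le_compat; nra.
  - assert (2 * M * Cmod h <= eps).
    { apply Rle_trans with ((2 * M + 1) * Cmod h); [nra|].
      apply Rmult_le_compat_l with (r := 2 * M + 1) in Hh2; [|lra].
      replace ((2 * M + 1) * (eps / (2 * M + 1))) with eps in Hh2 by (field; lra). lra. }
    nra.
Qed.

Lemma avg_FTC (z : C) : (avg z + z * avg' z)%C = f z.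
Proof.
  transitivity (CRInt (fun s => f (RtoC s * z) + RtoC s * (f1 (RtoC s * z) * z))%C 0 1).
  - unfold avg, avg'.
    rewrite <- (CRInt_scal z _ 0 1 (ex_CRInt_avg' z)).
    rewrite <- (CRInt_plus _ _ 0 1 (ex_CRInt_avg z) (ex_CRInt_scal z _ 0 1 (ex_CRInt_avg' z))).
    apply CRInt_ext. intros s. ring.
  - rewrite (CRInt_FTC (fun s => RtoC s * f (RtoC s * z))%C); [|lra| |].
    + replace (RtoC 1 * z)%C with z by ring. ring.
    + intros s _. apply (is_Rderive_real (fun y => y * f (y * z))%C).
      assert (D := is_Cderive_mult _ _ (RtoC s) _ _ (is_Cderive_id (RtoC s))
                     (is_Cderive_comp_mult_r f z (RtoC s) _ (f_deriv (RtoC s * z)%C))).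
      cbv beta in D. replace (RtoC 1 * f (RtoC s * z) + RtoC s * (f1 (RtoC s * z) * z))%C
        with (f (RtoC s * z) + RtoC s * (f1 (RtoC s * z) * z))%C in D by ring.
      exact D.
    + intros s _. eexists.
      apply (is_Rderive_real (fun y => f (y * z) + y * (f1 (y * z) * z))%C).
      apply is_Cderive_plus; [apply is_Cderive_comp_mult_r, f_deriv|].
      apply is_Cderive_mult; [apply is_Cderive_id|].
      apply is_Cderive_mult; [apply is_Cderive_comp_mult_r, f1_deriv | apply is_Cderive_const].
Qed.

Lemma is_Cderive_seg_integral (c z : C) :
  is_Cderive (fun x => seg_integral f x + c)%C z (f z).
Proof.
  assert (D := is_Cderive_plus _ _ z _ _
                 (is_Cderive_mult _ _ z _ _ (is_Cderive_id z) (is_Cderive_avg z))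
                 (is_Cderive_const c z)).
  cbv beta in D. rewrite <- avg_FTC.
  replace (avg z + z * avg' z)%C with (RtoC 1 * avg z + z * avg' z + RtoC 0)%C by ring.
  exact D.
Qed.

End SegmentPrimitive.

(** * Asymptotics at infinity *)

Definition Cinfty (P : C -> Prop) : Prop := exists T, forall z, T <= Cmod z -> P z.

Global Instance Cinfty_filter : Filter Cinfty.
Proof.
  constructor.
  - exists 0. auto.
  - intros A B [T1 H1] [T2 H2]. exists (Rmax T1 T2). intros z Hz.
    split; [apply H1 | apply H2]; apply Rle_trans with (Rmax T1 T2); auto;
      [apply Rmax_l | apply Rmax_r].
  - intros A B HAB [T H]. exists T. auto.
Qed.

Lemma Cinfty_Cmod_ge (r : R) : Cinfty (fun z => r <= Cmod z).
Proof. exists r. auto. Qed.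

Definition tends_O_inv (f : C -> C) (c : C) : Prop :=
  exists K, 0 <= K /\ Cinfty (fun z => Cmod (f z - c)%C <= K / Cmod z).

Lemma tends_O_inv_ext (f g : C -> C) (c : C) :
  Cinfty (fun z => f z = g z) -> tends_O_inv f c -> tends_O_inv g c.
Proof.
  intros E [K [HK H]]. exists K. split; [exact HK|].
  apply (filter_imp (fun z => f z = g z /\ Cmod (f z - c)%C <= K / Cmod z)).
  - intros z [Ez Hz]. rewrite <- Ez. exact Hz.
  - apply filter_and; assumption.
Qed.

Lemma tends_O_inv_const (c : C) : tends_O_inv (fun _ => c) c.
Proof.
  exists 0. split; [lra|]. apply filter_forall. intros z.
  replace (c - c)%C with (RtoC 0) by ring. rewrite Cmod_0. unfold Rdiv. lra.
Qed.

Lemma tends_O_inv_plus (f g : C -> C) (c d : C) : tends_O_inv f c -> tends_O_inv g d ->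
  tends_O_inv (fun z => f z + g z)%C (c + d)%C.
Proof.
  intros [K1 [HK1 H1]] [K2 [HK2 H2]]. exists (K1 + K2). split; [lra|].
  generalize (filter_and _ _ H1 H2). apply filter_imp. intros z [A B].
  replace (f z + g z - (c + d))%C with ((f z - c) + (g z - d))%C by ring.
  eapply Rle_trans; [apply Cmod_triangle|]. unfold Rdiv in *. lra.
Qed.

Lemma tends_O_inv_opp (f : C -> C) (c : C) : tends_O_inv f c ->
  tends_O_inv (fun z => - f z)%C (- c)%C.
Proof.
  intros [K [HK H]]. exists K. split; [exact HK|].
  revert H. apply filter_imp. intros z Hz.
  replace (- f z - - c)%C with (- (f z - c))%C by ring. rewrite Cmod_opp. exact Hz.
Qed.

Lemma tends_O_inv_Cmod_le (f : C -> C) (c : C) : tends_O_inv f c ->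
  Cinfty (fun z => Cmod (f z) <= Cmod c + 1).
Proof.
  intros [K [HK H]]. generalize (filter_and _ _ H (Cinfty_Cmod_ge (K + 1))).
  apply filter_imp. intros z [Hz Hz1].
  assert (K / Cmod z <= 1).
  { apply Rmult_le_reg_r with (Cmod z); [lra|].
    unfold Rdiv. rewrite Rmult_assoc, Rinv_l by lra. lra. }
  replace (f z) with (c + (f z - c))%C by ring.
  eapply Rle_trans; [apply Cmod_triangle|]. lra.
Qed.

Lemma tends_O_inv_Cmod_ge (f : C -> C) (c : C) : tends_O_inv f c -> c <> RtoC 0 ->
  Cinfty (fun z => Cmod c / 2 <= Cmod (f z)).
Proof.
  intros [K [HK H]] Hc. assert (Hm : 0 < Cmod c) by (apply Cmod_gt_0; auto).
  generalize (filter_and _ _ H (Cinfty_Cmod_ge (2 * K / Cmod c + 1))).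
  apply filter_imp. intros z [Hz Hz1].
  assert (K / Cmod z <= Cmod c / 2).
  { assert (0 <= 2 * K / Cmod c) by (apply Rdiv_le_0_compat; lra).
    apply Rmult_le_reg_r with (Cmod z); [lra|].
    unfold Rdiv. rewrite Rmult_assoc, Rinv_l by lra.
    assert (2 * K / Cmod c * Cmod c = 2 * K) by (field; lra). nra. }
  pose proof (Cmod_sub_le c (c - f z)%C). replace (c - (c - f z))%C with (f z) in H1 by ring.
  rewrite <- Cmod_opp in Hz. replace (- (f z - c))%C with (c - f z)%C in Hz by ring. lra.
Qed.

Lemma tends_O_inv_mult (f g : C -> C) (c d : C) : tends_O_inv f c -> tends_O_inv g d ->
  tends_O_inv (fun z => f z * g z)%C (c * d)%C.
Proof.
  intros Hf Hg. pose proof (tends_O_inv_Cmod_le g d Hg) as Bg.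
  destruct Hf as [K1 [HK1 H1]], Hg as [K2 [HK2 H2]].
  pose proof (Cmod_ge_0 c). pose proof (Cmod_ge_0 d).
  exists (K1 * (Cmod d + 1) + Cmod c * K2). split; [nra|].
  generalize (filter_and _ _ (filter_and _ _ H1 H2) (filter_and _ _ Bg (Cinfty_Cmod_ge 1))).
  apply filter_imp. intros z [[A B] [Cg Hz]].
  replace (f z * g z - c * d)%C with ((f z - c) * g z + c * (g z - d))%C by ring.
  eapply Rle_trans; [apply Cmod_triangle|]. rewrite !Cmod_mult.
  pose proof (Cmod_ge_0 (f z - c)%C).
  assert (Cmod (f z - c)%C * Cmod (g z) <= K1 / Cmod z * (Cmod d + 1))
    by (apply Rmult_le_compat; auto using Cmod_ge_0).
  assert (Cmod c * Cmod (g z - d)%C <= Cmod c * (K2 / Cmod z))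
    by (apply Rmult_le_compat_l; auto).
  unfold Rdiv in *. nra.
Qed.

Lemma tends_O_inv_inv (f : C -> C) (c : C) : tends_O_inv f c -> c <> RtoC 0 ->
  tends_O_inv (fun z => / f z)%C (/ c)%C.
Proof.
  intros Hf Hc. pose proof (tends_O_inv_Cmod_ge f c Hf Hc) as L.
  destruct Hf as [K [HK H]]. assert (Hm : 0 < Cmod c) by (apply Cmod_gt_0; auto).
  exists (2 * K / (Cmod c * Cmod c)). split; [apply Rdiv_le_0_compat; nra|].
  generalize (filter_and _ _ (filter_and _ _ H L) (Cinfty_Cmod_ge 1)).
  apply filter_imp. intros z [[Hz Lz] Hz1].
  assert (Hfz : f z <> RtoC 0) by (intro E; rewrite E, Cmod_0 in Lz; lra).
  replace (/ f z - / c)%C with (- (f z - c) / (f z * c))%C by (field; auto).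
  rewrite Cmod_div by (apply Cmult_neq_0; auto). rewrite Cmod_mult, Cmod_opp.
  apply Rle_trans with ((K / Cmod z) / (Cmod c / 2 * Cmod c)).
  - unfold Rdiv at 1 3. apply Rmult_le_compat; auto using Cmod_ge_0.
    + left. apply Rinv_0_lt_compat, Rmult_lt_0_compat; [apply Cmod_gt_0|]; auto.
    + apply Rinv_le_contravar; [nra|]. apply Rmult_le_compat_r; lra.
  - right. field. lra.
Qed.

Lemma Peval_tends_O_inv (l : list C) (N : nat) : (length l <= S N)%nat ->
  tends_O_inv (fun z => Peval l z / z ^ N)%C (nth N l (RtoC 0)).
Proof.
  revert N. induction l as [|a l IH]; intros N Hl.
  - eapply tends_O_inv_ext; [|destruct N; apply (tends_O_inv_const (RtoC 0))].
    apply filter_forall. intros z. simpl. unfold Cdiv. ring.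
  - destruct N as [|N].
    + destruct l; [|simpl in Hl; lia].
      eapply tends_O_inv_ext; [|apply (tends_O_inv_const a)].
      apply filter_forall. intros z. simpl. field.
    + simpl in Hl. destruct (IH N ltac:(lia)) as [K [HK H]].
      exists (K + Cmod a). split; [pose proof (Cmod_ge_0 a); lra|].
      generalize (filter_and _ _ H (Cinfty_Cmod_ge 1)). apply filter_imp.
      intros z [Hz Hz1]. assert (Hz0 : z <> RtoC 0) by (intro E; rewrite E, Cmod_0 in Hz1; lra).
      simpl nth. simpl Peval.
      replace ((a + z * Peval l z) / z ^ S N - nth N l (RtoC 0))%C
        with (a / z ^ S N + (Peval l z / z ^ N - nth N l (RtoC 0)))%C
        by (simpl; field; split; auto; apply Cpow_nz; auto).
      eapply Rle_trans; [apply Cmod_triangle|].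
      rewrite Cmod_div by (apply Cpow_nz; auto). rewrite Cmod_pow.
      assert (Cmod a / Cmod z ^ S N <= Cmod a / Cmod z).
      { unfold Rdiv. apply Rmult_le_compat_l; [apply Cmod_ge_0|].
        apply Rinv_le_contravar; [lra|]. simpl. rewrite <- (Rmult_1_r (Cmod z)) at 1.
        apply Rmult_le_compat_l; [lra|]. apply pow_R1_Rle. lra. }
      unfold Rdiv in *. lra.
Qed.

Lemma Cinfty_neq_0 : Cinfty (fun z => z <> RtoC 0).
Proof.
  generalize (Cinfty_Cmod_ge 1). apply filter_imp. intros z Hz E.
  rewrite E, Cmod_0 in Hz. lra.
Qed.

Lemma Cmod_scaled (f : C -> C) (k : nat) (z : C) : z <> RtoC 0 ->
  Cmod (f z) = Cmod (f z / z ^ k)%C * Cmod z ^ k.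
Proof.
  intros Hz. rewrite Cmod_div, Cmod_pow by (apply Cpow_nz; auto).
  field. apply pow_nonzero. intro E. apply Hz, Cmod_eq_0, E.
Qed.

Lemma RtoC_INR_neq_0 (n : nat) : (1 <= n)%nat -> RtoC (INR n) <> RtoC 0.
Proof. intros Hn E. apply RtoC_inj in E. apply (not_0_INR n); [lia | exact E]. Qed.

Section QAsymptotics.

Variables (cq : list C) (d : nat).
Hypothesis d_pos : (1 <= d)%nat.
Hypothesis q_length : length cq = S d.
Hypothesis q_lead : nth d cq (RtoC 0) = RtoC 1.

Let q := Peval cq.
Let q' := Peval (Pderiv cq).
Let q'' := Peval (Pderiv (Pderiv cq)).
Let qs z := (q z / z ^ d)%C.
Let q's z := (q' z * z / z ^ d)%C.
Let q''s z := (q'' z * (z * z) / z ^ d)%C.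


Lemma qs_tends : tends_O_inv qs (RtoC 1).
Proof. rewrite <- q_lead. apply Peval_tends_O_inv. lia. Qed.

Lemma q's_tends : tends_O_inv q's (RtoC (INR d)).
Proof.
  destruct d as [|d'] eqn:Ed; [lia|].
  pose proof (Peval_tends_O_inv (Pderiv cq) d' ltac:(rewrite Pderiv_length; lia)) as H.
  rewrite Pderiv_nth, q_lead, Cmult_1_r in H.
  eapply tends_O_inv_ext; [|exact H].
  generalize Cinfty_neq_0. apply filter_imp. intros z Hz. unfold q's, q'.
  simpl. field. split; auto. apply Cpow_nz; auto.
Qed.

Lemma q''s_tends : tends_O_inv q''s (RtoC (INR d) * (RtoC (INR d) - 1))%C.
Proof.
  destruct d as [|[|n]] eqn:Ed; [lia| |].
  - assert (E0 : Pderiv (Pderiv cq) = nil).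
    { assert (Hl : length (Pderiv (Pderiv cq)) = 0%nat) by (rewrite !Pderiv_length; lia).
      destruct (Pderiv (Pderiv cq)); [reflexivity | simpl in Hl; lia]. }
    replace (RtoC (INR 1) * (RtoC (INR 1) - 1))%C with (RtoC 0) by (simpl; ring).
    eapply tends_O_inv_ext; [|apply (tends_O_inv_const (RtoC 0))].
    generalize Cinfty_neq_0. apply filter_imp. intros z Hz.
    unfold q''s, q''. rewrite E0. simpl. field. auto.
  - pose proof (Peval_tends_O_inv (Pderiv (Pderiv cq)) n
      ltac:(rewrite !Pderiv_length; lia)) as H.
    rewrite !Pderiv_nth, q_lead in H.
    replace (RtoC (INR (S (S n))) * (RtoC (INR (S (S n))) - 1))%C
      with (RtoC (INR (S n)) * (RtoC (INR (S (S n))) * RtoC 1))%C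
      by (rewrite !S_INR, !RtoC_plus; ring).
    eapply tends_O_inv_ext; [|exact H].
    generalize Cinfty_neq_0. apply filter_imp. intros z Hz. unfold q''s, q''.
    simpl. field. split; auto. apply Cpow_nz; auto.
Qed.

Lemma q_Cmod_bounds :
  Cinfty (fun z => Cmod z ^ d / 2 <= Cmod (Peval cq z) <= 2 * Cmod z ^ d).
Proof.
  generalize (filter_and _ _ (filter_and _ _ (tends_O_inv_Cmod_ge _ _ qs_tends C1_nz)
    (tends_O_inv_Cmod_le _ _ qs_tends)) Cinfty_neq_0).
  apply filter_imp. intros z [[Hlo Hhi] Hz]. rewrite Cmod_1 in Hlo, Hhi.
  rewrite (Cmod_scaled _ d z Hz). fold q. fold (qs z).
  pose proof (pow_lt (Cmod z) d (proj1 (Cmod_gt_0 z) Hz)). split; nra.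
Qed.

Lemma q'_Cmod_ge : Cinfty (fun z => INR d / 2 * Cmod z ^ d <= Cmod (Peval (Pderiv cq) z) * Cmod z).
Proof.
  generalize (filter_and _ _ (tends_O_inv_Cmod_ge _ _ q's_tends (RtoC_INR_neq_0 d d_pos))
    Cinfty_neq_0).
  apply filter_imp. intros z [Hlo Hz].
  rewrite Cmod_R, Rabs_pos_eq in Hlo by apply pos_INR.
  rewrite <- Cmod_mult, (Cmod_scaled (fun z => Peval (Pderiv cq) z * z)%C d z Hz).
  fold q' (q's z). pose proof (pow_lt (Cmod z) d (proj1 (Cmod_gt_0 z) Hz)). nra.
Qed.

Lemma Cinfty_q_q'_neq_0 : Cinfty (fun z => Peval cq z <> RtoC 0 /\ Peval (Pderiv cq) z <> RtoC 0).
Proof.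
  generalize (filter_and _ _ (filter_and _ _ q_Cmod_bounds q'_Cmod_ge) Cinfty_neq_0).
  apply filter_imp. intros z [[[Hq _] Hq'] Hz].
  pose proof (pow_lt (Cmod z) d (proj1 (Cmod_gt_0 z) Hz)).
  assert (0 < INR d) by (apply lt_0_INR; lia).
  split; intro E; rewrite E, Cmod_0 in *; nra.
Qed.

End QAsymptotics.

Section Kernel.

Variables (cp cq : list C) (m d : nat).
Hypothesis p_length : length cp = S m.
Hypothesis p_lead : nth m cp (RtoC 0) = RtoC (INR d).
Hypothesis d_pos : (1 <= d)%nat.
Hypothesis q_length : length cq = S d.
Hypothesis q_lead : nth d cq (RtoC 0) = RtoC 1.

Definition lam : C := RtoC ((INR d - 1 - INR m) / INR d).

Let p := Peval cp.
Let p' := Peval (Pderiv cp).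
Let q := Peval cq.
Let q' := Peval (Pderiv cq).
Let q'' := Peval (Pderiv (Pderiv cq)).

Definition amp (z : C) : C := (Peval cp z / Peval (Pderiv cq) z)%C.

Definition amp' (z : C) : C :=
  (Peval (Pderiv cp) z / Peval (Pderiv cq) z
   - Peval cp z * Peval (Pderiv (Pderiv cq)) z / (Peval (Pderiv cq) z * Peval (Pderiv cq) z))%C.

(* [kernel (phi u) * e^u] is the derivative in [u] of
   [g (phi u) - amp (phi u) (1 + lam / u) e^u], where [u = q (phi u)]. *)
Definition kernel (z : C) : C :=
  (- (amp' z / Peval (Pderiv cq) z) * (1 + lam / Peval cq z)
   + amp z * lam / (Peval cq z * Peval cq z) - amp z * lam / Peval cq z)%C.

Let ps z := (p z / z ^ m)%C.
Let p's z := (p' z * z / z ^ m)%C.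
Let qs z := (q z / z ^ d)%C.
Let q's z := (q' z * z / z ^ d)%C.
Let q''s z := (q'' z * (z * z) / z ^ d)%C.

Let d_neq_0 := RtoC_INR_neq_0 d d_pos.
Let qs_lim := qs_tends cq d d_pos q_length q_lead.
Let q's_lim := q's_tends cq d d_pos q_length q_lead.
Let q''s_lim := q''s_tends cq d d_pos q_length q_lead.
Let q_q'_neq_0 := Cinfty_q_q'_neq_0 cq d d_pos q_length q_lead.

Lemma ps_tends : tends_O_inv ps (RtoC (INR d)).
Proof. rewrite <- p_lead. apply Peval_tends_O_inv. lia. Qed.

Lemma p's_tends : tends_O_inv p's (RtoC (INR m) * RtoC (INR d))%C.
Proof.
  destruct m as [|m'] eqn:Em.
  - destruct cp as [|a [|b l]]; simpl in p_length; try lia.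
    replace (RtoC (INR 0) * RtoC (INR d))%C with (RtoC 0) by (simpl; ring).
    eapply tends_O_inv_ext; [|apply (tends_O_inv_const (RtoC 0))].
    apply filter_forall. intros z. unfold p's, p'. simpl. field.
  - pose proof (Peval_tends_O_inv (Pderiv cp) m' ltac:(rewrite Pderiv_length; lia)) as H.
    rewrite Pderiv_nth, p_lead in H.
    eapply tends_O_inv_ext; [|exact H].
    generalize Cinfty_neq_0. apply filter_imp. intros z Hz. unfold p's, p'.
    simpl. field. split; auto. apply Cpow_nz; auto.
Qed.

(* Each of [ps, p's, qs, q's, q''s] has a limit at infinity, hence so do
   [kernel_main] and [kernel_rest] (by [tends_solve]). *)
Let kernel_main z :=
  (- ((p's z * q's z - ps z * q''s z) * / (q's z * (q's z * q's z)))
   - lam * ps z * / (q's z * qs z))%C.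
Let kernel_rest z :=
  (- (lam * (p's z * q's z - ps z * q''s z) * / (qs z * (q's z * (q's z * q's z))))
   + lam * ps z * / (q's z * (qs z * qs z)))%C.

Lemma kernel_factor (z : C) : z <> RtoC 0 -> q z <> RtoC 0 -> q' z <> RtoC 0 ->
  kernel z = (z ^ m * z / (z ^ d * z ^ d) * (kernel_main z + kernel_rest z / z ^ d))%C.
Proof.
  intros Hz Hq Hq'.
  assert (Hm : (z ^ m)%C <> RtoC 0) by (apply Cpow_nz; auto).
  assert (Hdd : (z ^ d)%C <> RtoC 0) by (apply Cpow_nz; auto).
  unfold kernel, amp, amp', kernel_main, kernel_rest, ps, p's, qs, q's, q''s,
    p, p', q, q', q'' in *.
  field. repeat split; auto.
Qed.

Ltac tends_solve :=
  repeat first [ apply ps_tends | apply p's_tends | apply qs_lim | apply q's_lim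
    | apply q''s_lim | apply tends_O_inv_const | eapply tends_O_inv_plus
    | eapply tends_O_inv_opp | eapply tends_O_inv_mult | eapply tends_O_inv_inv ];
  repeat first [ apply Cmult_neq_0 | apply d_neq_0 | apply C1_nz ].

(* The choice of [lam] cancels the leading term of [kernel]. *)
Lemma kernel_main_tends : tends_O_inv kernel_main (RtoC 0).
Proof.
  assert (H : tends_O_inv kernel_main
    (- ((RtoC (INR m) * RtoC (INR d) * RtoC (INR d)
         - RtoC (INR d) * (RtoC (INR d) * (RtoC (INR d) - 1)))
        * / (RtoC (INR d) * (RtoC (INR d) * RtoC (INR d))))
     - lam * RtoC (INR d) * / (RtoC (INR d) * RtoC 1))%C)
    by (unfold kernel_main, Cminus; tends_solve).
  replace (RtoC 0) with (- ((RtoC (INR m) * RtoC (INR d) * RtoC (INR d)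
         - RtoC (INR d) * (RtoC (INR d) * (RtoC (INR d) - 1)))
        * / (RtoC (INR d) * (RtoC (INR d) * RtoC (INR d))))
     - lam * RtoC (INR d) * / (RtoC (INR d) * RtoC 1))%C; [exact H|].
  unfold lam. rewrite RtoC_div by (apply not_0_INR; lia). rewrite !RtoC_minus.
  field. apply d_neq_0.
Qed.

Lemma kernel_rest_bounded : exists c, tends_O_inv kernel_rest c.
Proof. eexists. unfold kernel_rest, Cminus. tends_solve. Qed.

Lemma kernel_bound : exists Ck, 0 <= Ck /\
  Cinfty (fun z => Cmod (kernel z) <= Ck * (Cmod z ^ m / Cmod z ^ (2 * d))).
Proof.
  destruct kernel_rest_bounded as [c2 Hrest].
  destruct kernel_main_tends as [K [HK Hmain]].
  exists (K + (Cmod c2 + 1)). split; [pose proof (Cmod_ge_0 c2); lra|].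
  generalize (filter_and _ _ (filter_and _ _ Hmain (tends_O_inv_Cmod_le _ _ Hrest))
    (filter_and _ _ q_q'_neq_0 (Cinfty_Cmod_ge 1))).
  apply filter_imp. intros z [[H1 H2] [[Hq Hq'] Hz1]].
  assert (Hz : z <> RtoC 0) by (intro E; rewrite E, Cmod_0 in Hz1; lra).
  replace (kernel_main z - RtoC 0)%C with (kernel_main z) in H1 by ring.
  set (a := Cmod z) in *.
  assert (HD : 0 < a ^ d) by (apply pow_lt; lra).
  assert (HDa : a <= a ^ d).
  { destruct d as [|d']; [lia|]. simpl. rewrite <- (Rmult_1_r a) at 1.
    apply Rmult_le_compat_l; [lra|]. apply pow_R1_Rle; lra. }
  rewrite kernel_factor by auto.
  rewrite Cmod_mult, Cmod_div by (apply Cmult_neq_0; apply Cpow_nz; auto).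
  rewrite !Cmod_mult, !Cmod_pow.
  fold a. replace (a ^ (2 * d)) with (a ^ d * a ^ d) by (rewrite <- pow_add; f_equal; lia).
  assert (Hrest' : Cmod (kernel_rest z / z ^ d)%C <= (Cmod c2 + 1) / a).
  { rewrite Cmod_div, Cmod_pow by (apply Cpow_nz; auto). fold a.
    unfold Rdiv. apply Rmult_le_compat; auto using Cmod_ge_0.
    - left. apply Rinv_0_lt_compat. lra.
    - apply Rinv_le_contravar; lra. }
  pose proof (Cmod_triangle (kernel_main z) (kernel_rest z / z ^ d)%C).
  assert (0 <= a ^ m * a / (a ^ d * a ^ d))
    by (apply Rdiv_le_0_compat; [apply Rmult_le_pos; [apply pow_le|]|]; nra).
  apply Rle_trans with (a ^ m * a / (a ^ d * a ^ d) * ((K + (Cmod c2 + 1)) / a)).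
  - apply Rmult_le_compat_l; [assumption|]. unfold Rdiv in *. lra.
  - right. field. lra.
Qed.

Lemma amp_Cmod_ge : exists cP, 0 < cP /\
  Cinfty (fun z => cP * (Cmod z ^ m * Cmod z / Cmod z ^ d) <= Cmod (amp z)).
Proof.
  assert (Hd0 : 0 < INR d) by (apply lt_0_INR; lia).
  exists ((INR d / 2) / (INR d + 1)). split; [apply Rdiv_lt_0_compat; lra|].
  generalize (filter_and _ _
    (filter_and _ _ (tends_O_inv_Cmod_ge _ _ ps_tends d_neq_0)
                    (filter_and _ _ (tends_O_inv_Cmod_ge _ _ q's_lim d_neq_0)
                                    (tends_O_inv_Cmod_le _ _ q's_lim)))
    (filter_and _ _ q_q'_neq_0 Cinfty_neq_0)).
  apply filter_imp. intros z [[Hp [Hq's_lo Hq's]] [[_ Hq'] Hz]].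
  rewrite Cmod_R, Rabs_pos_eq in Hp, Hq's_lo, Hq's by apply pos_INR.
  set (a := Cmod z). assert (Ha : 0 < a) by (apply Cmod_gt_0; auto).
  assert (HA : 0 < a ^ m) by (apply pow_lt; lra).
  assert (HD : 0 < a ^ d) by (apply pow_lt; lra).
  assert (Ep : Cmod (Peval cp z) = Cmod (ps z) * a ^ m) by apply (Cmod_scaled _ m z Hz).
  assert (Eq' : Cmod (Peval (Pderiv cq) z) = Cmod (q's z) * a ^ d / a).
  { pose proof (Cmod_scaled (fun z => Peval (Pderiv cq) z * z)%C d z Hz) as E.
    cbv beta in E. rewrite Cmod_mult in E. fold a in E.
    unfold q's, q'. apply Rmult_eq_reg_r with a; [|lra]. rewrite E. field. lra. }
  unfold amp. rewrite Cmod_div by auto. rewrite Ep, Eq'.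
  unfold ps, q's, p, q' in *. cbv beta in *.
  apply Rle_trans with ((INR d / 2) * a ^ m / ((INR d + 1) * a ^ d / a)).
  - right. field. repeat split; lra.
  - unfold Rdiv. apply Rmult_le_compat.
    + apply Rmult_le_pos; lra.
    + left. apply Rinv_0_lt_compat, Rmult_lt_0_compat; [nra|]. apply Rinv_0_lt_compat; lra.
    + apply Rmult_le_compat_r; lra.
    + apply Rinv_le_contravar.
      * apply Rmult_lt_0_compat; [|apply Rinv_0_lt_compat; lra].
        apply Rmult_lt_0_compat; lra.
      * apply Rmult_le_compat_r; [left; apply Rinv_0_lt_compat; lra|]. nra.
Qed.

End Kernel.

(** * Integrating the remainder along rays *)

Lemma exp_pow (x : R) (n : nat) : exp x ^ n = exp (INR n * x).
Proof.
  induction n as [|n IH]; simpl pow.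
  - rewrite Rmult_0_l, exp_0. reflexivity.
  - rewrite IH, <- exp_plus, S_INR. f_equal. ring.
Qed.

Lemma pow_le_exp (j : nat) : exists M, 0 < M /\
  forall s, 0 <= s -> (1 + 2 * s) ^ j <= M * exp (s / 2).
Proof.
  destruct j as [|j'].
  - exists 1. split; [lra|]. intros s Hs. simpl. pose proof (exp_ineq1_le (s / 2)). lra.
  - set (j := S j').
    assert (Hj : 1 <= INR j) by (unfold j; rewrite S_INR; pose proof (pos_INR j'); lra).
    exists ((4 * INR j) ^ j). split; [apply pow_lt; lra|].
    intros s Hs.
    replace (1 + 2 * s) with (4 * INR j * ((1 + 2 * s) / (4 * INR j))) by (field; lra).
    rewrite Rpow_mult_distr. apply Rmult_le_compat_l; [apply pow_le; lra|].
    replace (s / 2) with (INR j * (s / (2 * INR j))) by (field; lra).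
    rewrite <- exp_pow. apply pow_incr. split; [apply Rdiv_le_0_compat; lra|].
    eapply Rle_trans; [|apply exp_ineq1_le].
    replace ((1 + 2 * s) / (4 * INR j)) with (/ (4 * INR j) + s / (2 * INR j)) by (field; lra).
    apply Rplus_le_compat_r. rewrite <- Rinv_1. apply Rinv_le_contravar; lra.
Qed.

Lemma exp_pow_tail_small (A W : R) (j : nat) (eps : R) : 0 <= A -> 0 <= W -> 0 < eps ->
  exists S1, forall S, S1 <= S -> A * exp (- S) * (W + 2 * S) ^ j < eps.
Proof.
  intros HA HW Heps. destruct (pow_le_exp j) as [M [HM HMp]].
  assert (HWj : 0 <= (1 + W) ^ j) by (apply pow_le; lra).
  set (C0 := A * (1 + W) ^ j * M).
  assert (HC0 : 0 <= C0) by (unfold C0; apply Rmult_le_pos; [apply Rmult_le_pos|]; lra).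
  exists (Rmax 0 (2 * C0 / eps)). intros S HS.
  pose proof (Rmax_l 0 (2 * C0 / eps)). pose proof (Rmax_r 0 (2 * C0 / eps)).
  assert (Hpow : (W + 2 * S) ^ j <= (1 + W) ^ j * (M * exp (S / 2))).
  { apply Rle_trans with ((1 + W) ^ j * (1 + 2 * S) ^ j).
    - rewrite <- Rpow_mult_distr. apply pow_incr. nra.
    - apply Rmult_le_compat_l; [lra | apply HMp; lra]. }
  assert (Eexp : exp (- S) * exp (S / 2) * exp (S / 2) = 1)
    by (rewrite <- !exp_plus, <- exp_0; f_equal; field).
  pose proof (exp_pos (- S)). pose proof (exp_pos (S / 2)). pose proof (exp_ineq1_le (S / 2)).
  assert (HC0S : C0 <= eps * (S / 2)).
  { apply Rmult_le_reg_r with (2 / eps); [apply Rdiv_lt_0_compat; lra|].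
    replace (eps * (S / 2) * (2 / eps)) with S by (field; lra).
    replace (C0 * (2 / eps)) with (2 * C0 / eps) by (field; lra). lra. }
  apply Rle_lt_trans with (C0 * (exp (- S) * exp (S / 2))).
  - unfold C0. replace (A * (1 + W) ^ j * M * (exp (- S) * exp (S / 2)))
      with (A * exp (- S) * ((1 + W) ^ j * (M * exp (S / 2)))) by ring.
    apply Rmult_le_compat_l; [apply Rmult_le_pos; lra | exact Hpow].
  - apply Rmult_lt_reg_r with (exp (S / 2)); [lra|].
    replace (C0 * (exp (- S) * exp (S / 2)) * exp (S / 2))
      with (C0 * (exp (- S) * exp (S / 2) * exp (S / 2))) by ring.
    rewrite Eexp, Rmult_1_r. nra.
Qed.

Lemma derivable_pt_lim_exp_half (A s : R) :
  derivable_pt_lim (fun s => - 2 * A * exp (- s / 2)) s (A * exp (- s / 2)).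
Proof.
  assert (H1 : derivable_pt_lim (fun s => - s / 2) s (- / 2)).
  { replace (- / 2) with (/ 2 * - 1) by field.
    apply (derivable_pt_lim_ext (fun s => / 2 * (- s))); [intros; field|].
    apply derivable_pt_lim_scal with (f := fun s => - s).
    apply derivable_pt_lim_opp, derivable_pt_lim_id. }
  replace (A * exp (- s / 2)) with (- 2 * A * (exp (- s / 2) * - / 2)) by field.
  apply derivable_pt_lim_scal with (f := fun s => exp (- s / 2)).
  exact (derivable_pt_lim_comp _ exp s _ _ H1 (derivable_pt_lim_exp _)).
Qed.

Lemma pow_le_reg (n : nat) (x y : R) : (1 <= n)%nat -> 0 <= x -> 0 <= y ->
  x ^ n <= y ^ n -> x <= y.
Proof.
  intros Hn Hx Hy H. destruct (Rle_lt_dec x y) as [L|L]; [exact L|].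
  exfalso. destruct n as [|n]; [lia|].
  assert (y ^ S n < x ^ S n); [|lra].
  clear H Hn. induction n as [|n IH]; simpl in *; [lra|].
  assert (0 <= y * y ^ n) by (apply Rmult_le_pos; [|apply pow_le]; lra). nra.
Qed.

Lemma C_Cauchy_limit (a : nat -> C) :
  (forall eps, 0 < eps -> exists N, forall n k, (n >= N)%nat -> (k >= N)%nat ->
     Cmod (a n - a k)%C < eps) ->
  exists l, forall eps, 0 < eps -> exists N, forall n, (n >= N)%nat -> Cmod (a n - l)%C < eps.
Proof.
  intros Ha.
  assert (Cre : Cauchy_crit (fun n => Re (a n))).
  { intros eps Heps. destruct (Ha eps Heps) as [N HN]. exists N. intros n k Hn Hk.
    eapply Rle_lt_trans; [|apply (HN n k Hn Hk)].
    unfold Rdist. change (Re (a n) - Re (a k)) with (Re (a n - a k)%C). apply re_le_Cmod. }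
  assert (Cim : Cauchy_crit (fun n => Im (a n))).
  { intros eps Heps. destruct (Ha eps Heps) as [N HN]. exists N. intros n k Hn Hk.
    eapply Rle_lt_trans; [|apply (HN n k Hn Hk)].
    unfold Rdist. change (Im (a n) - Im (a k)) with (Im (a n - a k)%C). apply im_le_Cmod. }
  destruct (Rcomplete.R_complete _ Cre) as [lr Hlr].
  destruct (Rcomplete.R_complete _ Cim) as [li Hli].
  exists (lr, li). intros eps Heps.
  destruct (Hlr (eps / 2) ltac:(lra)) as [N1 HN1].
  destruct (Hli (eps / 2) ltac:(lra)) as [N2 HN2].
  exists (max N1 N2). intros n Hn.
  specialize (HN1 n ltac:(lia)). specialize (HN2 n ltac:(lia)).
  eapply Rle_lt_trans; [apply Cmod_le_Re_Im|].
  unfold Rdist, Re, Im in *. simpl in *. unfold Rminus in *. lra.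
Qed.

Definition slit_domain (Rr : R) (w : C) : Prop := Rr < Cmod w /\ ~ (Im w = 0 /\ 0 <= Re w).

Lemma slit_domain_open (Rr : R) (w : C) : slit_domain Rr w ->
  exists del, 0 < del /\ forall v, Cmod (v - w)%C < del -> slit_domain Rr v.
Proof.
  intros [H1 H2].
  assert (Hc : forall v, Cmod (v - w)%C < Cmod w - Rr -> Rr < Cmod v).
  { intros v Hv. pose proof (Cmod_sub_le w (w - v)%C) as Hs.
    replace (w - (w - v))%C with v in Hs by ring.
    rewrite <- Cmod_opp in Hv. replace (- (v - w))%C with (w - v)%C in Hv by ring. lra. }
  destruct (Req_dec (Im w) 0) as [E|E].
  - assert (Hr : Re w < 0) by (apply Rnot_le_lt; intro; apply H2; auto).
    exists (Rmin (Cmod w - Rr) (- Re w)). split; [apply Rmin_glb_lt; lra|].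
    intros v Hv. pose proof (Rmin_l (Cmod w - Rr) (- Re w)).
    pose proof (Rmin_r (Cmod w - Rr) (- Re w)).
    split; [apply Hc; lra|]. intros [_ Hv2].
    pose proof (re_le_Cmod (v - w)%C) as Hs. apply Rabs_le_between in Hs.
    unfold Re in *. simpl in *. lra.
  - exists (Rmin (Cmod w - Rr) (Rabs (Im w))). split.
    { apply Rmin_glb_lt; [lra | apply Rabs_pos_lt; auto]. }
    intros v Hv. pose proof (Rmin_l (Cmod w - Rr) (Rabs (Im w))).
    pose proof (Rmin_r (Cmod w - Rr) (Rabs (Im w))).
    split; [apply Hc; lra|]. intros [Hv1 _].
    pose proof (im_le_Cmod (v - w)%C) as Hs. simpl in Hs. unfold Im in Hv1. rewrite Hv1 in Hs.
    replace (0 + - snd w) with (- Im w) in Hs by (unfold Im; ring). rewrite Rabs_Ropp in Hs. lra.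
Qed.

Section Asymptotics.

Variables (cp cq : list C) (m d : nat) (c : C) (Rr : R) (phi : C -> C).
Hypothesis p_length : length cp = S m.
Hypothesis p_lead : nth m cp (RtoC 0) = RtoC (INR d).
Hypothesis d_pos : (1 <= d)%nat.
Hypothesis q_length : length cq = S d.
Hypothesis q_lead : nth d cq (RtoC 0) = RtoC 1.
Hypothesis Rr_pos : 0 < Rr.
Hypothesis critical_values : forall z,
  Peval (Pderiv cq) z = RtoC 0 -> Cmod (Peval cq z) < Rr.
Hypothesis phi_continuous : forall w, slit_domain Rr w -> continuous phi w.
Hypothesis phi_right_inverse : forall w, slit_domain Rr w -> Peval cq (phi w) = w.

Let p := Peval cp.
Let p' := Peval (Pderiv cp).
Let p'' := Peval (Pderiv (Pderiv cp)).
Let q := Peval cq.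
Let q' := Peval (Pderiv cq).
Let q'' := Peval (Pderiv (Pderiv cq)).

Definition g (z : C) : C := (seg_integral (fun t => Peval cp t * Cexp (Peval cq t)) z + c)%C.

Definition remainder (u : C) : C :=
  (g (phi u) - amp cp cq (phi u) * ((1 + lam m d / u) * Cexp u))%C.

Lemma is_Cderive_g (z : C) : is_Cderive g z (p z * Cexp (q z))%C.
Proof.
  set (e z := Cexp (q z)).
  assert (De : forall z, is_Cderive e z (e z * q' z)%C)
    by (intros; apply (is_Cderive_comp q Cexp); [apply is_Cderive_Peval | apply is_Cderive_Cexp]).
  unfold g.
  apply (is_Cderive_seg_integral (fun t => Peval cp t * Cexp (Peval cq t))%C
           (fun z => (p' z + p z * q' z) * e z)%C
           (fun z => (p'' z + (p' z * q' z + p z * q'' z)) * e z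
                     + (p' z + p z * q' z) * (e z * q' z))%C).
  - intros x. assert (D := is_Cderive_mult _ _ x _ _ (is_Cderive_Peval cp x) (De x)).
    cbv beta in D. fold p p' in D.
    replace (p' x * e x + p x * (e x * q' x))%C with ((p' x + p x * q' x) * e x)%C in D by ring.
    exact D.
  - intros x.
    assert (D := is_Cderive_plus _ _ x _ _ (is_Cderive_Peval (Pderiv cp) x)
                   (is_Cderive_mult _ _ x _ _ (is_Cderive_Peval cp x)
                      (is_Cderive_Peval (Pderiv cq) x))).
    exact (is_Cderive_mult _ _ x _ _ D (De x)).
  - repeat first [ apply bounded_on_balls_plus | apply bounded_on_balls_mult
                 | apply bounded_on_balls_Cexp | apply bounded_on_balls_Peval ].
Qed.

Lemma slit_domain_neq_0 (u : C) : slit_domain Rr u -> u <> RtoC 0.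
Proof.
  intros [Hu _] E. rewrite E, Cmod_0 in Hu. lra.
Qed.

Lemma q'_phi_neq_0 (u : C) : slit_domain Rr u -> q' (phi u) <> RtoC 0.
Proof.
  intros Hu E. apply critical_values in E. rewrite phi_right_inverse in E by exact Hu.
  destruct Hu. lra.
Qed.

Lemma is_Cderive_phi (u : C) : slit_domain Rr u -> is_Cderive phi u (/ q' (phi u))%C.
Proof.
  intros Hu. apply (is_Cderive_inverse q).
  - destruct (slit_domain_open Rr u Hu) as [del [Hdel Hin]].
    exists del. split; [exact Hdel|]. intros v Hv. apply phi_right_inverse, Hin, Hv.
  - apply phi_continuous, Hu.
  - apply is_Cderive_Peval.
  - apply q'_phi_neq_0, Hu.
Qed.

Lemma is_Cderive_amp (z : C) : q' z <> RtoC 0 -> is_Cderive (amp cp cq) z (amp' cp cq z).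
Proof.
  intros Hz. assert (D := is_Cderive_div _ _ z _ _ (is_Cderive_Peval cp z)
                            (is_Cderive_Peval (Pderiv cq) z) Hz).
  unfold amp'. replace (Peval (Pderiv cp) z / Peval (Pderiv cq) z
    - Peval cp z * Peval (Pderiv (Pderiv cq)) z / (Peval (Pderiv cq) z * Peval (Pderiv cq) z))%C
    with ((Peval (Pderiv cp) z * Peval (Pderiv cq) z - Peval cp z * Peval (Pderiv (Pderiv cq)) z)
          / (Peval (Pderiv cq) z * Peval (Pderiv cq) z))%C by (field; exact Hz).
  exact D.
Qed.

(* Along [u = q z], [g'(z) = p(z) e^(q z)] becomes [amp e^u] in the variable [u];
   differentiating [amp (1 + lam / u) e^u] reproduces this up to [kernel * e^u]. *)
Lemma is_Cderive_remainder (u : C) : slit_domain Rr u ->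
  is_Cderive remainder u (Cexp u * kernel cp cq m d (phi u))%C.
Proof.
  intros Hu. pose proof (q'_phi_neq_0 u Hu) as Hq'. pose proof (slit_domain_neq_0 u Hu) as Hu0.
  pose proof (phi_right_inverse u Hu) as Hq. pose proof (is_Cderive_phi u Hu) as Dphi.
  assert (Dg := is_Cderive_comp _ _ u _ _ Dphi (is_Cderive_g (phi u))).
  assert (Damp := is_Cderive_comp _ _ u _ _ Dphi (is_Cderive_amp (phi u) Hq')).
  assert (Dfac := is_Cderive_mult _ _ u _ _
    (is_Cderive_plus _ _ u _ _ (is_Cderive_const 1 u)
       (is_Cderive_div _ _ u _ _ (is_Cderive_const (lam m d) u) (is_Cderive_id u) Hu0))
    (is_Cderive_Cexp u)).
  assert (D := is_Cderive_minus _ _ u _ _ Dg (is_Cderive_mult _ _ u _ _ Damp Dfac)).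
  unfold remainder. cbv beta in D. fold q in Hq.
  replace (Cexp u * kernel cp cq m d (phi u))%C with
    (p (phi u) * Cexp (q (phi u)) * / q' (phi u)
     - (amp' cp cq (phi u) * / q' (phi u) * ((1 + lam m d / u) * Cexp u)
        + amp cp cq (phi u) * ((RtoC 0 + (RtoC 0 * u - lam m d * RtoC 1) / (u * u)) * Cexp u
                               + (1 + lam m d / u) * Cexp u)))%C.
  - exact D.
  - unfold kernel, amp. fold p q q'. rewrite Hq. field. auto.
Qed.

Definition root_d (u : C) : R := Rpower (Cmod u) (/ INR d).

Definition decay (u : C) : R := root_d u ^ m / root_d u ^ (2 * d).

Lemma root_d_pos (u : C) : 0 < root_d u.
Proof. apply exp_pos. Qed.

Lemma root_d_pow (u : C) : 0 < Cmod u -> root_d u ^ d = Cmod u.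
Proof.
  intros H. unfold root_d. rewrite <- Rpower_pow by apply exp_pos.
  rewrite Rpower_mult, Rinv_l by (apply not_0_INR; lia). apply Rpower_1, H.
Qed.

Lemma decay_pos (u : C) : 0 < decay u.
Proof. pose proof (root_d_pos u). apply Rdiv_lt_0_compat; apply pow_lt; lra. Qed.

Lemma root_d_bounds (u : C) : 1 <= Cmod u -> 1 <= root_d u <= Cmod u.
Proof.
  intros H. pose proof (root_d_pos u). pose proof (root_d_pow u ltac:(lra)) as E.
  split; apply (pow_le_reg d); auto; try lra.
  - rewrite pow1, E. exact H.
  - rewrite E. rewrite <- (pow_1 (Cmod u)) at 1. apply Rle_pow; auto.
Qed.

Lemma decay_le (u : C) : 1 <= Cmod u -> decay u <= Cmod u ^ m.
Proof.
  intros H. destruct (root_d_bounds u H) as [H1 H2]. unfold decay.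
  apply Rle_trans with (root_d u ^ m).
  - unfold Rdiv. rewrite <- (Rmult_1_r (root_d u ^ m)) at 2.
    apply Rmult_le_compat_l; [apply pow_le; lra|].
    rewrite <- Rinv_1. apply Rinv_le_contravar; [lra | apply pow_R1_Rle; lra].
  - apply pow_incr. lra.
Qed.

Lemma root_d_comparable (u : C) (a : R) : 0 < Cmod u -> 0 <= a ->
  a ^ d / 2 <= Cmod u <= 2 * a ^ d -> root_d u / 2 <= a <= 2 * root_d u.
Proof.
  intros Hu Ha [Hlo Hhi]. pose proof (root_d_pos u). pose proof (root_d_pow u Hu) as E.
  assert (H2d : 2 <= 2 ^ d) by (rewrite <- (pow_1 2) at 1; apply Rle_pow; [lra | lia]).
  split; apply (pow_le_reg d); auto; try lra.
  - unfold Rdiv. rewrite Rpow_mult_distr, E, pow_inv.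
    apply Rle_trans with (Cmod u / 2); [|lra].
    unfold Rdiv. apply Rmult_le_compat_l; [lra | apply Rinv_le_contravar; lra].
  - rewrite Rpow_mult_distr, E. nra.
Qed.

Lemma Cinfty_phi (P : C -> Prop) : Cinfty P ->
  exists r, forall u, slit_domain Rr u -> r <= Cmod u -> P (phi u).
Proof.
  intros [T HT]. destruct (bounded_on_balls_Peval cq T) as [B [HB Hq]].
  exists (B + 1). intros u Hu Hr. apply HT.
  destruct (Rle_lt_dec T (Cmod (phi u))) as [L|L]; [exact L|].
  exfalso. specialize (Hq (phi u) ltac:(lra)). rewrite phi_right_inverse in Hq by exact Hu. lra.
Qed.

Lemma kernel_amp_bounds : exists r1 Ck cP, 1 <= r1 /\ Rr < r1 /\ 0 <= Ck /\ 0 < cP /\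
  forall u, slit_domain Rr u -> r1 <= Cmod u ->
    Cmod (kernel cp cq m d (phi u)) <= Ck * decay u /\
    cP * (root_d u ^ m * root_d u / root_d u ^ d) <= Cmod (amp cp cq (phi u)).
Proof.
  destruct (kernel_bound cp cq m d p_length p_lead d_pos q_length q_lead) as [Ck [HCk Hk]].
  destruct (amp_Cmod_ge cp cq m d p_length p_lead d_pos q_length q_lead) as [cP [HcP Ha]].
  destruct (Cinfty_phi _ (filter_and _ _ (filter_and _ _ Hk Ha)
              (q_Cmod_bounds cq d d_pos q_length q_lead))) as [r Hr].
  exists (Rmax r (Rmax 1 (Rr + 1))), (Ck * (2 ^ m * 2 ^ (2 * d))),
    (cP * ((/ 2) ^ m * / 2 / 2 ^ d)).
  pose proof (Rmax_l r (Rmax 1 (Rr + 1))). pose proof (Rmax_r r (Rmax 1 (Rr + 1))).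
  pose proof (Rmax_l 1 (Rr + 1)). pose proof (Rmax_r 1 (Rr + 1)).
  split; [lra|]. split; [lra|].
  split; [apply Rmult_le_pos; [|apply Rmult_le_pos; apply pow_le]; lra|].
  split; [apply Rmult_lt_0_compat; [|apply Rdiv_lt_0_compat;
    [apply Rmult_lt_0_compat; [apply pow_lt|]|apply pow_lt]]; lra|].
  intros u Hu Hru. destruct (Hr u Hu ltac:(lra)) as [[Hku Hau] Hq].
  rewrite phi_right_inverse in Hq by exact Hu.
  set (z := phi u) in *. set (a := Cmod z) in *. set (r0 := root_d u).
  assert (Hr0 : 0 < r0) by apply root_d_pos.
  destruct (root_d_comparable u a ltac:(lra) (Cmod_ge_0 z) Hq) as [Hlo Hup].
  fold r0 in Hlo, Hup.
  split.
  - eapply Rle_trans; [exact Hku|]. unfold decay. fold r0.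
    rewrite Rmult_assoc. apply Rmult_le_compat_l; [exact HCk|].
    apply Rle_trans with ((2 * r0) ^ m / (r0 / 2) ^ (2 * d)).
    + unfold Rdiv. apply Rmult_le_compat.
      * apply pow_le. apply Cmod_ge_0.
      * left. apply Rinv_0_lt_compat, pow_lt. lra.
      * apply pow_incr. split; [apply Cmod_ge_0 | exact Hup].
      * apply Rinv_le_contravar; [apply pow_lt; lra|]. apply pow_incr. lra.
    + unfold Rdiv. rewrite !Rpow_mult_distr, !pow_inv. right. field.
      repeat split; apply pow_nonzero; lra.
  - eapply Rle_trans; [|exact Hau]. rewrite Rmult_assoc. apply Rmult_le_compat_l; [lra|].
    apply Rle_trans with ((r0 / 2) ^ m * (r0 / 2) / (2 * r0) ^ d).
    + unfold Rdiv. rewrite !Rpow_mult_distr, !pow_inv. right. field.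
      repeat split; apply pow_nonzero; lra.
    + unfold Rdiv. apply Rmult_le_compat.
      * apply Rmult_le_pos; [apply pow_le|]; lra.
      * left. apply Rinv_0_lt_compat, pow_lt. lra.
      * apply Rmult_le_compat; try lra; [apply pow_le; lra | apply pow_incr; lra].
      * apply Rinv_le_contravar; [apply pow_lt; lra | apply pow_incr; lra].
Qed.

Lemma decay_along_ray (w u : C) (s : R) : 1 <= Cmod w -> 0 <= s ->
  Cmod w / 3 <= Cmod u <= Cmod w + 2 * s ->
  decay u <= 3 ^ (2 * d) * (1 + 2 * s) ^ m * decay w.
Proof.
  intros Hw Hs [H1 H2]. unfold decay.
  assert (Hu : 0 < Cmod u) by lra.
  pose proof (root_d_pos u). pose proof (root_d_pos w).
  pose proof (root_d_pow u Hu) as Eu. pose proof (root_d_pow w ltac:(lra)) as Ew.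
  assert (H3d : 1 <= 3 ^ d) by (apply pow_R1_Rle; lra).
  assert (H12s : 1 <= (1 + 2 * s) ^ d) by (apply pow_R1_Rle; lra).
  assert (U : root_d u <= root_d w * (1 + 2 * s)).
  { apply (pow_le_reg d); auto; try nra. rewrite Rpow_mult_distr, Eu, Ew.
    apply Rle_trans with (Cmod w * (1 + 2 * s)); [nra|].
    apply Rmult_le_compat_l; [lra|]. rewrite <- (pow_1 (1 + 2 * s)) at 1.
    apply Rle_pow; [lra | exact d_pos]. }
  assert (L : root_d w / 3 <= root_d u).
  { apply (pow_le_reg d); auto; try lra. unfold Rdiv.
    rewrite Rpow_mult_distr, Eu, Ew, pow_inv.
    apply Rle_trans with (Cmod w / 3); [|lra]. unfold Rdiv.
    apply Rmult_le_compat_l; [lra|]. apply Rinv_le_contravar; [lra|].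
    rewrite <- (pow_1 3) at 1. apply Rle_pow; [lra | exact d_pos]. }
  apply Rle_trans with ((root_d w * (1 + 2 * s)) ^ m / (root_d w / 3) ^ (2 * d)).
  - unfold Rdiv. apply Rmult_le_compat.
    + apply pow_le. lra.
    + left. apply Rinv_0_lt_compat, pow_lt. lra.
    + apply pow_incr. lra.
    + apply Rinv_le_contravar; [apply pow_lt; lra | apply pow_incr; lra].
  - unfold Rdiv. rewrite !Rpow_mult_distr, pow_inv. right. field.
    repeat split; apply pow_nonzero; lra.
Qed.

Definition good_ray (w e : C) : Prop := forall s, 0 <= s ->
  slit_domain Rr (w + RtoC s * e)%C /\ (Cmod w + s) / 3 <= Cmod (w + RtoC s * e)%C /\
  Cmod (w + RtoC s * e)%C <= Cmod w + 2 * s.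

Lemma good_ray_neg_real (x : R) : Rr < - x -> good_ray (RtoC x) (RtoC (-1)).
Proof.
  intros Hx. unfold good_ray. intros s Hs.
  replace (RtoC x + RtoC s * RtoC (-1))%C with (RtoC (x - s))
    by (rewrite RtoC_minus; ring).
  unfold slit_domain. rewrite !Cmod_R, !Rabs_left by lra. repeat split; try lra.
  intros [_ H0]. simpl in H0. lra.
Qed.

Definition ray_dir (w : C) : C := (-1, if Rle_dec 0 (Im w) then 1 else -1).

Lemma Cmod_ray_dir (w : C) : Re (ray_dir w) = -1 /\ Cmod (ray_dir w) <= 2.
Proof.
  split; [reflexivity|]. eapply Rle_trans; [apply Cmod_le_Re_Im|].
  assert (Hm1 : Rabs (-1) = 1) by (rewrite Rabs_left; lra).
  unfold ray_dir. simpl. destruct (Rle_dec 0 (Im w)); rewrite ?Hm1, ?Rabs_R1; lra.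
Qed.

(* The direction [-1 + i sign(Im w)] moves away from both the positive real axis
   and the origin: [|w + s e|^2 >= |w|^2 - 2 s |w| + 2 s^2 >= ((|w| + s) / 3)^2]. *)
Lemma good_ray_dir (w : C) : slit_domain Rr w -> 3 * Rr < Cmod w -> good_ray w (ray_dir w).
Proof.
  intros Hw Hw3 s Hs. set (tau := if Rle_dec 0 (Im w) then 1 else -1).
  assert (Ht1 : tau * tau = 1) by (unfold tau; destruct (Rle_dec 0 (Im w)); lra).
  assert (Ht2 : 0 <= tau * Im w) by (unfold tau; destruct (Rle_dec 0 (Im w)); nra).
  assert (ER : Re (w + RtoC s * ray_dir w)%C = Re w - s)
    by (unfold ray_dir, Re, Cplus, Cmult, RtoC; simpl; ring).
  assert (EI : Im (w + RtoC s * ray_dir w)%C = Im w + s * tau)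
    by (unfold ray_dir, tau, Im, Cplus, Cmult, RtoC; simpl; ring).
  pose proof (re_le_Cmod w) as HRw. apply Rabs_le_between in HRw.
  pose proof (Cmod2_alt w) as Hw2. pose proof (Cmod_ge_0 w).
  pose proof (Cmod2_alt (w + RtoC s * ray_dir w)%C) as Hws2.
  pose proof (Cmod_ge_0 (w + RtoC s * ray_dir w)%C).
  rewrite ER, EI in Hws2. simpl in Hw2, Hws2.
  assert (Hl : (Cmod w + s) / 3 <= Cmod (w + RtoC s * ray_dir w)%C).
  { apply Rsqr_incr_0_var; [unfold Rsqr | lra].
    assert (s * Re w <= s * Cmod w) by (apply Rmult_le_compat_l; lra).
    assert (0 <= s * (tau * Im w)) by (apply Rmult_le_pos; lra).
    pose proof (Rle_0_sqr (Cmod w - 5 / 4 * s)). unfold Rsqr in *.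
    nra. }
  split; [split|split; [exact Hl|]].
  - lra.
  - intros [Hi Hr]. rewrite EI in Hi. rewrite ER in Hr. destruct Hw as [_ Hw']. apply Hw'.
    unfold tau in Hi. destruct (Rle_dec 0 (Im w)); split; lra.
  - eapply Rle_trans; [apply Cmod_triangle|]. rewrite Cmod_mult, Cmod_R, Rabs_pos_eq by lra.
    pose proof (proj2 (Cmod_ray_dir w)). nra.
Qed.

Section KernelDecay.

Variables r1 Ck : R.
Hypothesis r1_ge_1 : 1 <= r1.
Hypothesis Rr_lt_r1 : Rr < r1.
Hypothesis Ck_nonneg : 0 <= Ck.
Hypothesis kernel_decay : forall u, slit_domain Rr u -> r1 <= Cmod u ->
  Cmod (kernel cp cq m d (phi u)) <= Ck * decay u.

Lemma remainder_deriv_along_ray_le (M : R) (w e : C) (s : R) :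
  (forall s, 0 <= s -> (1 + 2 * s) ^ m <= M * exp (s / 2)) ->
  slit_domain Rr w -> 3 * r1 <= Cmod w -> Re e = -1 -> Cmod e <= 2 -> good_ray w e -> 0 <= s ->
  Cmod (Cexp (w + RtoC s * e) * kernel cp cq m d (phi (w + RtoC s * e)) * e)%C
    <= 2 * Ck * 3 ^ (2 * d) * M * exp (Re w) * decay w * exp (- s / 2).
Proof.
  intros HMp Hw Hw3 He He2 Hray Hs. destruct (Hray s Hs) as [HG [Hlo Hhi]].
  rewrite !Cmod_mult, Cmod_Cexp.
  replace (Re (w + RtoC s * e)%C) with (Re w - s) by (destruct w, e; simpl in *; rewrite He; ring).
  specialize (kernel_decay _ HG ltac:(lra)).
  assert (Hq : decay (w + RtoC s * e)%C <= 3 ^ (2 * d) * (1 + 2 * s) ^ m * decay w)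
    by (apply decay_along_ray; lra).
  specialize (HMp s Hs).
  assert (Esplit : exp (Re w - s) = exp (Re w) * exp (- s / 2) * exp (- s / 2))
    by (rewrite <- !exp_plus; f_equal; field).
  assert (Einv : exp (- s / 2) * exp (s / 2) = 1)
    by (rewrite <- exp_plus, <- exp_0; f_equal; field).
  pose proof (exp_pos (Re w)). pose proof (exp_pos (- s / 2)). pose proof (exp_pos (s / 2)).
  pose proof (decay_pos w). pose proof (Cmod_ge_0 e).
  pose proof (Cmod_ge_0 (kernel cp cq m d (phi (w + RtoC s * e)%C))).
  assert (H3d : 0 <= 3 ^ (2 * d)) by (apply pow_le; lra).
  assert (0 <= (1 + 2 * s) ^ m) by (apply pow_le; lra).
  assert (Hpoly : exp (- s / 2) * (1 + 2 * s) ^ m <= M).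
  { apply Rmult_le_reg_r with (exp (s / 2)); [lra|].
    replace (exp (- s / 2) * (1 + 2 * s) ^ m * exp (s / 2))
      with ((exp (- s / 2) * exp (s / 2)) * (1 + 2 * s) ^ m) by ring.
    rewrite Einv, Rmult_1_l. lra. }
  apply Rle_trans with (exp (Re w - s) * (Ck * (3 ^ (2 * d) * (1 + 2 * s) ^ m * decay w)) * 2).
  - apply Rmult_le_compat; try nra.
    + apply Rmult_le_pos; [left; apply exp_pos | auto].
    + apply Rmult_le_compat_l; [left; apply exp_pos|].
      eapply Rle_trans; [exact kernel_decay|]. apply Rmult_le_compat_l; auto.
  - rewrite Esplit.
    replace (exp (Re w) * exp (- s / 2) * exp (- s / 2)
             * (Ck * (3 ^ (2 * d) * (1 + 2 * s) ^ m * decay w)) * 2)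
      with (exp (Re w) * exp (- s / 2) * (exp (- s / 2) * (1 + 2 * s) ^ m)
            * (2 * Ck * 3 ^ (2 * d) * decay w)) by ring.
    replace (2 * Ck * 3 ^ (2 * d) * M * exp (Re w) * decay w * exp (- s / 2))
      with (exp (Re w) * exp (- s / 2) * M * (2 * Ck * 3 ^ (2 * d) * decay w)) by ring.
    assert (0 <= 2 * Ck * 3 ^ (2 * d)) by (apply Rmult_le_pos; lra).
    apply Rmult_le_compat_r; [apply Rmult_le_pos; lra|].
    apply Rmult_le_compat_l; [apply Rmult_le_pos; lra | exact Hpoly].
Qed.

(* Along a good ray [Re] decreases at unit speed, so the factor [e^(Re w - s)]
   beats the polynomial growth of [decay]; integrating [remainder'] gives a bound that is
   uniform in the length [S]. *)
Lemma remainder_ray_bound : exists K1, 0 <= K1 /\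
  forall w e S, slit_domain Rr w -> 3 * r1 <= Cmod w ->
  Re e = -1 -> Cmod e <= 2 -> 0 <= S -> good_ray w e ->
  Cmod (remainder (w + RtoC S * e) - remainder w)%C <= K1 * exp (Re w) * decay w.
Proof.
  destruct (pow_le_exp m) as [M [HM HMp]].
  assert (HB : 0 <= 2 * Ck * 3 ^ (2 * d)) by (apply Rmult_le_pos; [lra | apply pow_le; lra]).
  exists (4 * Ck * 3 ^ (2 * d) * M). split; [apply Rmult_le_pos; lra|].
  intros w e S Hw Hw3 He He2 HS Hray.
  set (A := 2 * Ck * 3 ^ (2 * d) * M * exp (Re w) * decay w).
  assert (HA : 0 <= A).
  { pose proof (exp_pos (Re w)). pose proof (decay_pos w).
    unfold A. apply Rmult_le_pos; [|lra]. apply Rmult_le_pos; [|lra]. apply Rmult_le_pos; lra. }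
  replace (remainder w) with (remainder (w + RtoC 0 * e)%C) by (f_equal; ring).
  eapply Rle_trans.
  - apply (mean_value_ineq (fun s => remainder (w + RtoC s * e)%C)
      (fun s => Cexp (w + RtoC s * e) * kernel cp cq m d (phi (w + RtoC s * e)) * e)%C
      (fun s => - 2 * A * exp (- s / 2)) (fun s => A * exp (- s / 2)) 0 S HS).
    + intros s Hs. apply is_Rderive_line, is_Cderive_remainder, Hray. lra.
    + intros s _. apply derivable_pt_lim_exp_half.
    + intros s Hs. apply (remainder_deriv_along_ray_le M); auto. lra.
  - replace (- 0 / 2) with 0 by field. rewrite exp_0.
    pose proof (exp_pos (- S / 2)).
    assert (2 * A = 4 * Ck * 3 ^ (2 * d) * M * exp (Re w) * decay w) by (unfold A; ring).
    nra.
Qed.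

Lemma remainder_vertical_increment (v : C) (L : R) : Re v <= - (3 * r1) -> Cmod v <= L ->
  Cmod (remainder v - remainder (RtoC (Re v)))%C <= exp (Re v) * Ck * L ^ m * L.
Proof.
  intros Hv HL.
  assert (Hx : Cmod (RtoC (Re v)) <= L)
    by (rewrite Cmod_R; eapply Rle_trans; [apply re_le_Cmod | exact HL]).
  assert (Hseg : forall t, 0 <= t <= 1 ->
     Re (RtoC (Re v) + RtoC t * (v - RtoC (Re v)))%C = Re v /\
     3 * r1 <= Cmod (RtoC (Re v) + RtoC t * (v - RtoC (Re v)))%C <= L /\
     slit_domain Rr (RtoC (Re v) + RtoC t * (v - RtoC (Re v)))%C).
  { intros t Ht.
    assert (HRe : Re (RtoC (Re v) + RtoC t * (v - RtoC (Re v)))%C = Re v)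
      by (destruct v; simpl; ring).
    pose proof (re_le_Cmod (RtoC (Re v) + RtoC t * (v - RtoC (Re v)))%C) as Hre.
    rewrite HRe, Rabs_left in Hre by lra.
    split; [exact HRe|]. split; [split; [lra | apply Cmod_convex_comb; auto]|].
    split; [lra|]. intros [_ Hr]. lra. }
  eapply Rle_trans.
  - apply (Cmod_sub_le_segment remainder (fun u => Cexp u * kernel cp cq m d (phi u))%C
             (RtoC (Re v)) v (exp (Re v) * Ck * L ^ m)).
    + intros t Ht. apply is_Cderive_remainder, (Hseg t Ht).
    + intros t Ht. destruct (Hseg t Ht) as (HRe & [Hpt1 Hpt2] & Gpt).
      rewrite Cmod_mult, Cmod_Cexp, HRe, Rmult_assoc.
      apply Rmult_le_compat_l; [left; apply exp_pos|].
      eapply Rle_trans; [apply kernel_decay; auto; lra|].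
      apply Rmult_le_compat_l; [exact Ck_nonneg|].
      eapply Rle_trans; [apply decay_le; lra|]. apply pow_incr. split; [apply Cmod_ge_0 | lra].
  - apply Rmult_le_compat_l.
    + apply Rmult_le_pos; [apply Rmult_le_pos; [left; apply exp_pos | lra]|].
      apply pow_le. pose proof (Cmod_ge_0 v). lra.
    + eapply Rle_trans; [apply Cmod_le_Re_Im|].
      replace (Re (v - RtoC (Re v))%C) with 0 by (destruct v; simpl; ring).
      rewrite Rabs_R0, Rplus_0_l. replace (Im (v - RtoC (Re v))%C) with (Im v)
        by (destruct v; simpl; ring).
      eapply Rle_trans; [apply im_le_Cmod | exact HL].
Qed.

Section RayEstimates.

Variable K1 : R.
Hypothesis K1_nonneg : 0 <= K1.
Hypothesis ray_bound : forall w e S, slit_domain Rr w -> 3 * r1 <= Cmod w ->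
  Re e = -1 -> Cmod e <= 2 -> 0 <= S -> good_ray w e ->
  Cmod (remainder (w + RtoC S * e) - remainder w)%C <= K1 * exp (Re w) * decay w.

Lemma remainder_neg_real_increment (x S : R) : x <= - (3 * r1) -> 0 <= S ->
  Cmod (remainder (RtoC (x - S)) - remainder (RtoC x))%C <= K1 * exp x * decay (RtoC x).
Proof.
  intros Hx HS.
  replace (RtoC (x - S)) with (RtoC x + RtoC S * RtoC (-1))%C by (rewrite RtoC_minus; ring).
  change x with (Re (RtoC x)) at 2. apply ray_bound; [| | reflexivity | | exact HS |].
  - split; [rewrite Cmod_R, Rabs_left; lra | intros [_ H0]; simpl in H0; lra].
  - rewrite Cmod_R, Rabs_left; lra.
  - rewrite Cmod_R, Rabs_left; lra.
  - apply good_ray_neg_real. lra.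
Qed.

Lemma neg_real_bound_small (eps : R) : 0 < eps -> exists X, X <= - (3 * r1) /\
  forall x, x <= X -> K1 * exp x * decay (RtoC x) < eps.
Proof.
  intros Heps. destruct (pow_le_exp m) as [M [HM HMp]].
  exists (Rmin (- (3 * r1)) (- 2 * (K1 * M + 1) / eps)). split; [apply Rmin_l|].
  intros x Hx. pose proof (Rmin_l (- (3 * r1)) (- 2 * (K1 * M + 1) / eps)).
  pose proof (Rmin_r (- (3 * r1)) (- 2 * (K1 * M + 1) / eps)).
  assert (Hc : Cmod (RtoC x) = - x) by (rewrite Cmod_R, Rabs_left by lra; reflexivity).
  assert (Q1 : decay (RtoC x) <= (- x) ^ m) by (rewrite <- Hc; apply decay_le; lra).
  assert (Q2 : (- x) ^ m <= M * exp (- x / 2))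
    by (eapply Rle_trans; [|apply HMp; lra]; apply pow_incr; lra).
  pose proof (decay_pos (RtoC x)). pose proof (exp_pos x). pose proof (exp_pos (- x / 2)).
  pose proof (exp_pos (x / 2)).
  assert (E : exp x * exp (- x / 2) = exp (x / 2)) by (rewrite <- exp_plus; f_equal; field).
  assert (B1 : K1 * exp x * decay (RtoC x) <= K1 * M * exp (x / 2)).
  { rewrite <- E. apply Rle_trans with (K1 * exp x * (M * exp (- x / 2))).
    - apply Rmult_le_compat_l; [apply Rmult_le_pos|]; lra.
    - right. ring. }
  assert (B2 : exp (x / 2) * (1 - x / 2) <= 1).
  { pose proof (exp_ineq1_le (- x / 2)).
    assert (exp (x / 2) * exp (- x / 2) = 1)
      by (rewrite <- exp_plus, <- exp_0; f_equal; field).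
    nra. }
  assert (B3 : (K1 * M + 1) / eps < 1 - x / 2).
  { assert (- 2 * (K1 * M + 1) / eps = - 2 * ((K1 * M + 1) / eps)) by (field; lra). lra. }
  assert ((K1 * M + 1) * exp (x / 2) <= eps * (exp (x / 2) * (1 - x / 2))).
  { replace (K1 * M + 1) with (eps * ((K1 * M + 1) / eps)) by (field; lra).
    rewrite Rmult_assoc. apply Rmult_le_compat_l; [lra|]. nra. }
  nra.
Qed.

Lemma remainder_limit_neg_real : exists cS, forall x, x <= - (3 * r1) ->
  Cmod (remainder (RtoC x) - cS)%C <= K1 * exp x * decay (RtoC x).
Proof.
  set (xs := fun n : nat => - (3 * r1) - INR n).
  assert (Hinc : forall n x, xs n <= x -> x <= - (3 * r1) ->
            Cmod (remainder (RtoC (xs n)) - remainder (RtoC x))%C <= K1 * exp x * decay (RtoC x)).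
  { intros n x Hn Hx. replace (xs n) with (x - (x - xs n)) by ring.
    apply remainder_neg_real_increment; lra. }
  destruct (C_Cauchy_limit (fun n => remainder (RtoC (xs n)))) as [cS HcS].
  { intros eps Heps. destruct (neg_real_bound_small (eps / 2) ltac:(lra)) as [X [HX HXs]].
    destruct (INR_unbounded (- (3 * r1) - X)) as [N HN].
    specialize (HXs (xs N) ltac:(unfold xs; lra)).
    exists N. intros n k Hn Hk. apply le_INR in Hn, Hk.
    assert (Hnk : forall j, (j >= N)%nat ->
              Cmod (remainder (RtoC (xs j)) - remainder (RtoC (xs N)))%C
                                           <= K1 * exp (xs N) * decay (RtoC (xs N))).
    { intros j Hj. apply le_INR in Hj. replace (xs j) with (xs N - (INR j - INR N))
        by (unfold xs; ring).
      apply remainder_neg_real_increment; [unfold xs; pose proof (pos_INR N); lra | lra]. }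
    pose proof (Hnk n ltac:(apply INR_le; lra)). pose proof (Hnk k ltac:(apply INR_le; lra)).
    replace (remainder (RtoC (xs n)) - remainder (RtoC (xs k)))%C
      with ((remainder (RtoC (xs n)) - remainder (RtoC (xs N)))
            + - (remainder (RtoC (xs k)) - remainder (RtoC (xs N))))%C
      by ring.
    eapply Rle_lt_trans; [apply Cmod_triangle|]. rewrite Cmod_opp. lra. }
  exists cS. intros x Hx. apply Rle_plus_epsilon. intros eps Heps.
  destruct (HcS eps Heps) as [N1 HN1].
  destruct (INR_unbounded (- (3 * r1) - x)) as [N2 HN2].
  set (n := max N1 N2).
  specialize (HN1 n ltac:(unfold n; lia)).
  assert (Hxn : xs n <= x).
  { assert (Hn2 : (N2 <= n)%nat) by (unfold n; lia). apply le_INR in Hn2. unfold xs. lra. }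
  pose proof (Hinc n x Hxn Hx).
  replace (remainder (RtoC x) - cS)%C
    with ((remainder (RtoC (xs n)) - cS) + - (remainder (RtoC (xs n)) - remainder (RtoC x)))%C
    by ring.
  eapply Rle_trans; [apply Cmod_triangle|]. rewrite Cmod_opp. lra.
Qed.

Lemma remainder_far_along_ray_le (cS w : C) (S : R) :
  (forall x, x <= - (3 * r1) -> Cmod (remainder (RtoC x) - cS)%C <= K1 * exp x * decay (RtoC x)) ->
  slit_domain Rr w -> 3 * r1 <= Cmod w -> 0 <= S -> Re w + 3 * r1 <= S ->
  Cmod (remainder (w + RtoC S * ray_dir w) - cS)%C
    <= (Ck + K1) * exp (Re w) * exp (- S) * (Cmod w + 2 * S) ^ Datatypes.S m.
Proof.
  intros Hlim Hw Hw3 HS HSw.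
  set (wS := (w + RtoC S * ray_dir w)%C).
  set (xS := Re w - S). set (L := Cmod w + 2 * S).
  assert (HxS : Re wS = xS) by (unfold wS, xS, ray_dir, Re; simpl; ring).
  destruct (good_ray_dir w Hw ltac:(lra) S HS) as [_ [_ HwL]].
  fold wS L in HwL.
  assert (HxL : Cmod (RtoC xS) <= L).
  { rewrite Cmod_R, <- HxS. eapply Rle_trans; [apply re_le_Cmod | exact HwL]. }
  assert (HL1 : 1 <= L) by (unfold L; lra).
  assert (HLm : 0 <= L ^ m) by (apply pow_le; lra).
  pose proof (exp_pos xS).
  assert (P2 : Cmod (remainder wS - remainder (RtoC xS))%C <= exp xS * Ck * L ^ m * L).
  { rewrite <- HxS. apply remainder_vertical_increment; [rewrite HxS; unfold xS; lra | exact HwL]. }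
  assert (P3 : Cmod (remainder (RtoC xS) - cS)%C <= K1 * exp xS * L ^ m).
  { eapply Rle_trans; [apply Hlim; unfold xS; lra|].
    apply Rmult_le_compat_l; [apply Rmult_le_pos; lra|].
    eapply Rle_trans; [apply decay_le; rewrite Cmod_R, Rabs_left; unfold xS; lra|].
    apply pow_incr. split; [apply Cmod_ge_0 | exact HxL]. }
  replace ((Ck + K1) * exp (Re w) * exp (- S)) with ((Ck + K1) * exp xS)
    by (unfold xS; rewrite Rmult_assoc, <- exp_plus; f_equal; f_equal; ring).
  replace (remainder wS - cS)%C
    with ((remainder wS - remainder (RtoC xS)) + (remainder (RtoC xS) - cS))%C by ring.
  eapply Rle_trans; [apply Cmod_triangle|]. fold L. simpl pow.
  assert (K1 * exp xS * L ^ m <= K1 * exp xS * (L * L ^ m)).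
  { apply Rmult_le_compat_l; [apply Rmult_le_pos; lra|]. nra. }
  replace ((Ck + K1) * exp xS * (L * L ^ m))
    with (exp xS * Ck * L ^ m * L + K1 * exp xS * (L * L ^ m)) by ring.
  lra.
Qed.

Lemma remainder_along_ray_tends (cS w : C) :
  (forall x, x <= - (3 * r1) -> Cmod (remainder (RtoC x) - cS)%C <= K1 * exp x * decay (RtoC x)) ->
  slit_domain Rr w -> 3 * r1 <= Cmod w ->
  forall eps, 0 < eps -> exists S, 0 <= S /\ Cmod (remainder (w + RtoC S * ray_dir w) - cS)%C < eps.
Proof.
  intros Hlim Hw Hw3 eps Heps.
  destruct (exp_pow_tail_small ((Ck + K1) * exp (Re w)) (Cmod w) (Datatypes.S m) eps)
    as [S1 HS1];
    [pose proof (exp_pos (Re w)); apply Rmult_le_pos; lra | apply Cmod_ge_0 | exact Heps |].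
  pose proof (Rmax_l S1 (Rmax (Re w + 3 * r1) 0)). pose proof (Rmax_r S1 (Rmax (Re w + 3 * r1) 0)).
  pose proof (Rmax_l (Re w + 3 * r1) 0). pose proof (Rmax_r (Re w + 3 * r1) 0).
  set (S := Rmax S1 (Rmax (Re w + 3 * r1) 0)) in *.
  exists S. split; [lra|].
  eapply Rle_lt_trans; [apply remainder_far_along_ray_le; auto; lra | apply HS1; lra].
Qed.

Lemma remainder_near_limit (cS w : C) :
  (forall x, x <= - (3 * r1) -> Cmod (remainder (RtoC x) - cS)%C <= K1 * exp x * decay (RtoC x)) ->
  slit_domain Rr w -> 3 * r1 <= Cmod w ->
  Cmod (remainder w - cS)%C <= K1 * exp (Re w) * decay w.
Proof.
  intros Hlim Hw Hw3. apply Rle_plus_epsilon. intros eps Heps.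
  destruct (remainder_along_ray_tends cS w Hlim Hw Hw3 eps Heps) as [S [HS Hclose]].
  destruct (Cmod_ray_dir w) as [He He2].
  pose proof (ray_bound w (ray_dir w) S Hw Hw3 He He2 HS (good_ray_dir w Hw ltac:(lra))).
  replace (remainder w - cS)%C with (- (remainder (w + RtoC S * ray_dir w) - remainder w)
                             + (remainder (w + RtoC S * ray_dir w) - cS))%C by ring.
  eapply Rle_trans; [apply Cmod_triangle|]. rewrite Cmod_opp. lra.
Qed.

End RayEstimates.

End KernelDecay.

Lemma decay_div_amp_scale (u : C) : 0 < Cmod u ->
  decay u / (root_d u ^ m * root_d u / root_d u ^ d)
  = Rpower (Cmod u) (-1 - / INR d).
Proof.
  intros Hu. pose proof (root_d_pos u) as Hr. pose proof (root_d_pow u Hu) as E.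
  replace (-1 - / INR d) with (- (1 + / INR d)) by ring.
  rewrite Rpower_Ropp, Rpower_plus, Rpower_1 by exact Hu. fold (root_d u).
  rewrite <- E. unfold decay.
  replace (root_d u ^ (2 * d)) with (root_d u ^ d * root_d u ^ d)
    by (rewrite <- pow_add; f_equal; lia).
  field. repeat split; try apply pow_nonzero; lra.
Qed.

Lemma remainder_asymptotics : exists cS K1 r1 cP, 0 < cP /\ 1 <= r1 /\
  forall w, slit_domain Rr w -> 3 * r1 <= Cmod w ->
    Cmod (remainder w - cS)%C <= K1 * exp (Re w) * decay w /\
    cP * (root_d w ^ m * root_d w / root_d w ^ d) <= Cmod (amp cp cq (phi w)).
Proof.
  destruct kernel_amp_bounds as (r1 & Ck & cP & Hr1 & HRr & HCk & HcP & Hb).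
  assert (Hk : forall u, slit_domain Rr u -> r1 <= Cmod u ->
            Cmod (kernel cp cq m d (phi u)) <= Ck * decay u) by apply Hb.
  destruct (remainder_ray_bound r1 Ck Hr1 HRr HCk Hk) as [K1 [HK1 Hray]].
  destruct (remainder_limit_neg_real r1 Hr1 HRr K1 HK1 Hray) as [cS HcS].
  exists cS, K1, r1, cP. split; [exact HcP|]. split; [exact Hr1|].
  intros w Hw Hw3. split.
  - exact (remainder_near_limit r1 Ck Hr1 HRr HCk Hk K1 HK1 Hray cS w HcS Hw Hw3).
  - apply (Hb w Hw). lra.
Qed.

(* Dividing [remainder w - cS] by the size [|amp (phi w) e^w|] of the main term turns
   [e^(Re w) decay w] into [|w|^(-1 - 1/d)]. *)
Lemma g_phi_expansion : exists cS K r0, forall w, slit_domain Rr w -> r0 <= Cmod w ->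
  exists E, Cmod E <= K * Rpower (Cmod w) (-1 - / INR d) /\
    g (phi w) = (cS + amp cp cq (phi w) * (1 + lam m d / w + E) * Cexp w)%C.
Proof.
  destruct remainder_asymptotics as (cS & K1 & r1 & cP & HcP & Hr1 & Hasym).
  exists cS, (K1 / cP), (3 * r1). intros w Hw Hw3.
  destruct (Hasym w Hw Hw3) as [HH Hamp].
  assert (Hw0 : 0 < Cmod w) by lra.
  pose proof (root_d_pos w) as Hr.
  assert (Hscale : 0 < root_d w ^ m * root_d w / root_d w ^ d)
    by (apply Rdiv_lt_0_compat; [apply Rmult_lt_0_compat; [apply pow_lt|]|apply pow_lt]; lra).
  assert (Ha : amp cp cq (phi w) <> RtoC 0)
    by (intro E; rewrite E, Cmod_0 in Hamp; nra).
  exists ((remainder w - cS) / (amp cp cq (phi w) * Cexp w))%C. split.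
  - rewrite Cmod_div by (apply Cmult_neq_0; [exact Ha | apply Cexp_neq_0]).
    rewrite Cmod_mult, Cmod_Cexp, <- (decay_div_amp_scale w Hw0).
    pose proof (exp_pos (Re w)). pose proof (decay_pos w).
    apply Rle_trans with (K1 * exp (Re w) * decay w
                          / (cP * (root_d w ^ m * root_d w / root_d w ^ d) * exp (Re w))).
    + unfold Rdiv at 1 3. apply Rmult_le_compat; auto using Cmod_ge_0.
      * left. apply Rinv_0_lt_compat, Rmult_lt_0_compat; [apply Cmod_gt_0|]; auto.
      * apply Rinv_le_contravar; [apply Rmult_lt_0_compat; nra|].
        apply Rmult_le_compat_r; lra.
    + right. field. repeat split; try (apply pow_nonzero); lra.
  - pose proof (Cexp_neq_0 w). pose proof (slit_domain_neq_0 w Hw).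
    unfold remainder. field. repeat split; assumption.
Qed.

End Asymptotics.

Open Scope C_scope.

(* Only the continuity of [phi] and [q (phi w) = w] on [G] are used: neither the
   two-sided bound on [|q z|] nor the description of [S] as a component of
   [q^-1(G)] is needed. *)
Theorem lemma4p1
  (cp cq : list C) (m d : nat) (c : C) (Rr : R) (phi : C -> C) (x0 : C) :
  (* p has degree m and leading coefficient d *)
  length cp = S m -> nth m cp (RtoC 0) = RtoC (INR d) ->
  (* q is monic of degree d >= 1 *)
  (1 <= d)%nat -> length cq = S d -> nth d cq (RtoC 0) = RtoC 1 ->
  (0 < Rr)%R ->
  (* all critical values of q lie in D(0,R) *)
  (forall z, Peval (Pderiv cq) z = RtoC 0 -> (Cmod (Peval cq z) < Rr)%R) ->
  (* 2^-d |z|^d <= |q z| <= 2^d |z|^d  for |z| >= R^(1/d)/2 *)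
  (forall z, (/2 * Rpower Rr (/ INR d) <= Cmod z)%R ->
     ((/2) ^ d * Cmod z ^ d <= Cmod (Peval cq z) <= 2 ^ d * Cmod z ^ d)%R) ->
  let p := Peval cp in
  let q := Peval cq in
  let q' := Peval (Pderiv cq) in
  let g := fun z => seg_integral (fun t => p t * Cexp (q t)) z + c in
  let lam := RtoC ((INR d - 1 - INR m) / INR d) in
  (* G = C \ (closed disk D(0,R) u [0,+oo)) *)
  let G := fun w : C => (Rr < Cmod w)%R /\ ~ (Im w = 0%R /\ (0 <= Re w)%R) in
  (* S is the component of q^{-1}(G) containing x0 *)
  G (q x0) ->
  let S := component (fun z => G (q z)) x0 in
  (* phi is the branch of q^{-1} on G with phi(G) = S *)
  (forall w, G w -> continuous phi w) ->
  (forall w, G w -> q (phi w) = w) ->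
  (forall z, S z <-> exists w, G w /\ phi w = z) ->
  exists (cS : C) (K r0 : R),
    forall w, G w -> (r0 <= Cmod w)%R ->
      exists E : C,
        (Cmod E <= K * Rpower (Cmod w) (-1 - / INR d))%R /\
        g (phi w) = cS + p (phi w) / q' (phi w) * (1 + lam / w + E) * Cexp w.
Proof.
  intros Hlp Hnp Hd Hlq Hnq HR Hcrit _ p q q' g lam G _ S Hcont Hinv _.
  exact (g_phi_expansion cp cq m d c Rr phi Hlp Hnp Hd Hlq Hnq HR Hcrit Hcont Hinv).
Qed.
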